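(* Let $0<r_1<r_2$, $N\ge 2$, and let $h:[r_1,r_2]\times[0,\infty)\to[0,\infty)$ be continuous with $h(t,0)=0$. Let $q$ and $f$ be defined from $h$ as in the context, and consider, for $\lambda>0$, the boundary value problem $$u''(t)+\lambda q(t)f(t,u(t))=0,\quad t\in(0,1),\qquad u(0)=0=u(1). \qquad (P_\lambda)$$ Assume that $\lim_{u\to0^+}\frac{f(t,u)}{u}=\infty$ uniformly in $t\in(0,1)$. Then for each $R>0$ there exists a constant $\lambda_R>0$ such that for every $\lambda<\lambda_R$ (with $\lambda>0$), problem $(P_\lambda)$ has a positive solution $u$ with $\sup_{t\in[0,1]}u(t)\le R$.
   Context: The problem $(P_\lambda)$ arises from radial solutions of $-\Delta v=\lambda h(|x|,v)$ in the annulus $\{x\in\mathbb{R}^N: r_1<|x|<r_2\}$, $v=0$ on the boundary. The functions $q$ and $f$ are defined as follows. If $N=2$: $q(t)=\left[r_2\left(\frac{r_1}{r_2}\right)^t\log\frac{r_2}{r_1}\right]^2$ and $f(t,u)=h\!\left(r_2\left(\frac{r_1}{r_2}\right)^t,u\right)$. If $N\ge 3$: with $A=\frac{(r_1r_2)^{N-2}}{r_2^{N-2}-r_1^{N-2}}$ and $B=\frac{r_2^{N-2}}{r_2^{N-2}-r_1^{N-2}}$, $q(t)=(N-2)^{-2}\frac{A^{2/(N-2)}}{(B-t)^{2(N-1)/(N-2)}}$ and $f(t,u)=h\!\left(\left(\frac{A}{B-t}\right)^{1/(N-2)},u\right)$. In either case $q$ is continuous on $[0,1]$ and bounded between positive constants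 there. A positive solution of $(P_\lambda)$ is a function $u\in C([0,1])\cap C^2(0,1)$ satisfying $(P_\lambda)$ with $u(t)>0$ for $t\in(0,1)$. *)

From Stdlib Require Import Reals Lra.
From Coquelicot Require Import Coquelicot.
Open Scope R_scope.

Definition cA (r1 r2 : R) (N : nat) : R :=
  Rpower (r1 * r2) (INR N - 2) / (Rpower r2 (INR N - 2) - Rpower r1 (INR N - 2)).
Definition cB (r1 r2 : R) (N : nat) : R :=
  Rpower r2 (INR N - 2) / (Rpower r2 (INR N - 2) - Rpower r1 (INR N - 2)).

(* The change of variable t |-> radius r(t) in [r1, r2]. *)
Definition radius (r1 r2 : R) (N : nat) (t : R) : R :=
  match N with
  | 2%nat => r2 * Rpower (r1 / r2) t
  | _ => Rpower (cA r1 r2 N / (cB r1 r2 N - t)) (1 / (INR N - 2))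
  end.

Definition qfun (r1 r2 : R) (N : nat) (t : R) : R :=
  match N with
  | 2%nat => (r2 * Rpower (r1 / r2) t * ln (r2 / r1)) ^ 2
  | _ => / ((INR N - 2) ^ 2) * Rpower (cA r1 r2 N) (2 / (INR N - 2))
         / Rpower (cB r1 r2 N - t) (2 * (INR N - 1) / (INR N - 2))
  end.

Definition ffun (r1 r2 : R) (N : nat) (h : R -> R -> R) (t u : R) : R :=
  h (radius r1 r2 N t) u.

Definition continuous_on_domain (r1 r2 : R) (h : R -> R -> R) : Prop :=
  forall t u, r1 <= t <= r2 -> 0 <= u ->
  forall eps, 0 < eps -> exists delta, 0 < delta /\
    forall t' u', r1 <= t' <= r2 -> 0 <= u' ->
      Rabs (t' - t) < delta -> Rabs (u' - u) < delta ->
      Rabs (h t' u' - h t u) < eps.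

Definition continuous_on_01 (u : R -> R) : Prop :=
  forall x, 0 <= x <= 1 -> forall eps, 0 < eps -> exists delta, 0 < delta /\
    forall y, 0 <= y <= 1 -> Rabs (y - x) < delta -> Rabs (u y - u x) < eps.

Definition C2_open01 (u : R -> R) : Prop :=
  forall t, 0 < t < 1 ->
    ex_derive u t /\ ex_derive (Derive u) t /\
    continuous (Derive (Derive u)) t.

Definition positive_solution (r1 r2 : R) (N : nat) (h : R -> R -> R)
  (lam : R) (u : R -> R) : Prop :=
  continuous_on_01 u /\ C2_open01 u /\
  (forall t, 0 < t < 1 ->
     Derive (Derive u) t + lam * qfun r1 r2 N t * ffun r1 r2 N h t (u t) = 0) /\
  u 0 = 0 /\ u 1 = 0 /\
  (forall t, 0 < t < 1 -> 0 < u t).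

(* Shooting on a discretisation.  Let G(t, y) = q(t) f(t, y), extended continuously to all (t, y).
   On the grid k/n the semi-implicit Euler scheme
     x_0 = 0,  p_0 = s,  x_(k+1) = x_k + p_k / n,  p_(k+1) = p_k - (lam / n) G((k+1)/n, x_(k+1))
   has concave trajectories since G >= 0.  With lam sup G < R the slope s = R ends above 0.  If
   G(t, y) >= M y for 0 < y < d with lam M > 16 > pi^2, the slope s = d/2 keeps x below d, and a
   discrete Sturm comparison with sin(pi k / n) forces x_n < 0.  The intermediate value theorem
   gives a slope with x_n = 0, and concavity traps that solution between d t (1 - t) and R.  The
   discrete solutions and their slopes are uniformly Lipschitz, so they have pointwise limits u, v
   along a free ultrafilter on n (which replaces Arzela-Ascoli), and the discrete Taylor estimates
   pass to the limit as u' = v, v' = -lam G(t, u). *)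

From Stdlib Require Import Reals Lra Lia ZArith.
From Stdlib Require Import Classical IndefiniteDescription.
From Coquelicot Require Import Coquelicot.
From mathcomp Require classical.filter ssrnat.
Open Scope R_scope.

Definition sin_grid (n k : nat) : R := sin (PI * INR k / INR n).

Section SinGrid.
Variable n : nat.
Hypothesis n_ge2 : (2 <= n)%nat.

Let n_gt0 : 0 < INR n.
Proof. apply lt_0_INR; lia. Qed.

Lemma sin_grid_0 : sin_grid n 0 = 0.
Proof. unfold sin_grid. rewrite INR_0, Rmult_0_r, Rdiv_0_l. apply sin_0. Qed.

Lemma sin_grid_n : sin_grid n n = 0.
Proof. unfold sin_grid. replace (PI * INR n / INR n) with PI by (field; lra). apply sin_PI. Qed.

Lemma sin_grid_ge0 k : (k <= n)%nat -> 0 <= sin_grid n k.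
Proof.
  intros Hk. pose proof PI_RGT_0. apply le_INR in Hk. pose proof (pos_INR k).
  apply sin_ge_0.
  - apply Rdiv_le_0_compat; [apply Rmult_le_pos|]; lra.
  - apply Rle_div_l; [lra|]. nra.
Qed.

Lemma sin_grid_gt0 k : (0 < k < n)%nat -> 0 < sin_grid n k.
Proof.
  intros [Hk0 Hkn]. pose proof PI_RGT_0. apply lt_INR in Hk0, Hkn. rewrite INR_0 in Hk0.
  apply sin_gt_0.
  - apply Rdiv_lt_0_compat; [apply Rmult_lt_0_compat|]; lra.
  - apply Rlt_div_l; [lra|]. nra.
Qed.

Lemma sin_grid_rec k :
  sin_grid n (S (S k)) + sin_grid n k = 2 * cos (PI / INR n) * sin_grid n (S k).
Proof.
  unfold sin_grid. rewrite !S_INR.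
  replace (PI * (INR k + 1 + 1) / INR n) with (PI * (INR k + 1) / INR n + PI / INR n)
    by (field; lra).
  replace (PI * INR k / INR n) with (PI * (INR k + 1) / INR n - PI / INR n) by (field; lra).
  rewrite sin_plus, sin_minus. ring.
Qed.

Lemma grid_eigenvalue_le : 2 - 2 * cos (PI / INR n) <= 16 / (INR n * INR n).
Proof.
  pose proof PI_RGT_0. pose proof PI_4.
  assert (Hn2 : 2 <= INR n) by (apply (le_INR 2); lia).
  set (a := PI / INR n).
  assert (Ha : 0 < a <= PI / 2).
  { split; [apply Rdiv_lt_0_compat; lra|].
    apply Rmult_le_compat_l; [lra|]. apply Rinv_le_contravar; lra. }
  destruct (cos_bound a 0 ltac:(lra) ltac:(lra)) as [Hcos _].
  unfold cos_approx, cos_term in Hcos. simpl in Hcos.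
  assert (a * a <= 16 / (INR n * INR n)).
  { unfold a. replace (PI / INR n * (PI / INR n)) with (PI * PI / (INR n * INR n))
      by (field; lra).
    apply Rmult_le_compat_r; [apply Rlt_le, Rinv_0_lt_compat; nra| nra]. }
  lra.
Qed.

End SinGrid.

Fixpoint scheme (G : R -> R -> R) (n : nat) (lam s : R) (k : nat) : R * R :=
  match k with
  | O => (0, s)
  | S k' => let xp := scheme G n lam s k' in
            let x' := fst xp + snd xp / INR n in
            (x', snd xp - lam / INR n * G (INR (S k') / INR n) x')
  end.

Definition scheme_x G n lam s k := fst (scheme G n lam s k).
Definition scheme_p G n lam s k := snd (scheme G n lam s k).

Section Scheme.
Variable G : R -> R -> R.
Variable n : nat.
Variables lam s : R.
Hypothesis G_ge0 : forall t y, 0 <= G t y.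
Hypothesis n_ge1 : (1 <= n)%nat.
Hypothesis lam_gt0 : 0 < lam.

Local Notation x := (scheme_x G n lam s).
Local Notation p := (scheme_p G n lam s).

Lemma scheme_x_0 : x 0 = 0. Proof. reflexivity. Qed.
Lemma scheme_p_0 : p 0 = s. Proof. reflexivity. Qed.

Lemma scheme_x_S k : x (S k) = x k + p k / INR n.
Proof. reflexivity. Qed.

Lemma scheme_p_S k : p (S k) = p k - lam / INR n * G (INR (S k) / INR n) (x (S k)).
Proof. reflexivity. Qed.

Lemma INR_n_gt0 : 0 < INR n.
Proof. apply lt_0_INR; lia. Qed.

Lemma scheme_p_S_le k : p (S k) <= p k.
Proof.
  rewrite scheme_p_S. pose proof INR_n_gt0.
  enough (0 <= lam / INR n * G (INR (S k) / INR n) (x (S k))) by lra.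
  apply Rmult_le_pos; [apply Rlt_le, Rdiv_lt_0_compat; lra | apply G_ge0].
Qed.

Lemma scheme_p_le i j : (i <= j)%nat -> p j <= p i.
Proof. induction 1; [lra | pose proof (scheme_p_S_le m); lra]. Qed.

Lemma scheme_p_le_s k : p k <= s.
Proof. rewrite <- scheme_p_0; apply scheme_p_le; lia. Qed.

Lemma scheme_x_sub_bounds i j : (i <= j)%nat ->
  (INR j - INR i) / INR n * p j <= x j - x i <= (INR j - INR i) / INR n * p i.
Proof.
  intros Hij. pose proof INR_n_gt0.
  induction Hij as [|j Hij IH].
  - unfold Rdiv; lra.
  - rewrite scheme_x_S, S_INR.
    pose proof (scheme_p_S_le j). pose proof (scheme_p_le i j Hij).
    assert (Hd : 0 <= (INR j - INR i) / INR n)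
      by (apply le_INR in Hij; apply Rdiv_le_0_compat; lra).
    replace ((INR j + 1 - INR i) / INR n) with ((INR j - INR i) / INR n + / INR n)
      by (field; lra).
    assert (/ INR n * p (S j) <= / INR n * p j)
      by (apply Rmult_le_compat_l; [apply Rlt_le, Rinv_0_lt_compat|]; lra).
    assert (/ INR n * p j <= / INR n * p i)
      by (apply Rmult_le_compat_l; [apply Rlt_le, Rinv_0_lt_compat|]; lra).
    assert ((INR j - INR i) / INR n * p (S j) <= (INR j - INR i) / INR n * p j)
      by (apply Rmult_le_compat_l; lra).
    unfold Rdiv in *; nra.
Qed.

Lemma scheme_x_concave i k j : (i <= k)%nat -> (k <= j)%nat ->
  (INR j - INR k) * x i + (INR k - INR i) * x j <= (INR j - INR i) * x k.
Proof.
  intros Hik Hkj. pose proof INR_n_gt0.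
  destruct (scheme_x_sub_bounds i k Hik) as [Hl _].
  destruct (scheme_x_sub_bounds k j Hkj) as [_ Hu].
  apply le_INR in Hik, Hkj.
  set (P := p k) in *.
  assert (0 <= (INR j - INR k) * (x k - x i - (INR k - INR i) / INR n * P))
    by (apply Rmult_le_pos; lra).
  assert (0 <= (INR k - INR i) * ((INR j - INR k) / INR n * P - (x j - x k)))
    by (apply Rmult_le_pos; lra).
  assert ((INR j - INR k) * ((INR k - INR i) / INR n * P)
          = (INR k - INR i) * ((INR j - INR k) / INR n * P)) by (field; lra).
  nra.
Qed.

Lemma scheme_x_le k : x k <= s * (INR k / INR n).
Proof.
  destruct (scheme_x_sub_bounds 0 k ltac:(lia)) as [_ Hu].
  rewrite scheme_x_0, scheme_p_0, INR_0 in Hu. lra.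
Qed.

Lemma scheme_x_ge0 k : (k <= n)%nat -> 0 <= x n -> 0 <= x k.
Proof.
  intros Hk Hxn. pose proof INR_n_gt0. pose proof (pos_INR k).
  pose proof (scheme_x_concave 0 k n ltac:(lia) Hk) as C.
  rewrite scheme_x_0, INR_0 in C. apply le_INR in Hk.
  assert (0 <= INR k * x n) by (apply Rmult_le_pos; lra).
  assert (0 <= INR n * x k) by lra.
  apply (Rmult_le_reg_l (INR n)); lra.
Qed.

Lemma scheme_x_ge_tent j d k : (j <= n)%nat -> (k <= n)%nat -> x n = 0 ->
  0 <= d -> d <= x j -> d * (INR k / INR n) * (1 - INR k / INR n) <= x k.
Proof.
  intros Hj Hk Hxn Hd Hdj. pose proof INR_n_gt0.
  assert (Hxk : 0 <= x k) by (apply scheme_x_ge0; [exact Hk | lra]).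
  pose proof (le_INR _ _ Hj). pose proof (le_INR _ _ Hk).
  pose proof (pos_INR k). pose proof (pos_INR j).
  enough (d * INR k * (INR n - INR k) <= INR n * INR n * x k).
  { replace (d * (INR k / INR n) * (1 - INR k / INR n))
      with (d * INR k * (INR n - INR k) / (INR n * INR n)) by (field; lra).
    apply Rle_div_l; nra. }
  destruct (Nat.le_ge_cases k j) as [Hkj|Hjk].
  - pose proof (scheme_x_concave 0 k j ltac:(lia) Hkj) as C.
    rewrite scheme_x_0, INR_0 in C.
    assert (INR k * d <= INR k * x j) by (apply Rmult_le_compat_l; lra).
    assert (INR j * x k <= INR n * x k) by (apply Rmult_le_compat_r; lra).
    assert (d * INR k * (INR n - INR k) <= d * INR k * INR n) by nra.
    nra.
  - pose proof (scheme_x_concave j k n Hjk Hk) as C. rewrite Hxn in C.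
    pose proof (le_INR _ _ Hjk).
    assert ((INR n - INR k) * d <= (INR n - INR k) * x j) by (apply Rmult_le_compat_l; lra).
    assert ((INR n - INR j) * x k <= INR n * x k) by (apply Rmult_le_compat_r; lra).
    assert (0 <= d * (INR n - INR k)) by (apply Rmult_le_pos; lra).
    assert (d * (INR n - INR k) * INR k <= d * (INR n - INR k) * INR n)
      by (apply Rmult_le_compat_l; lra).
    nra.
Qed.

Lemma scheme_p_increment i j eps Gs : (i <= j)%nat ->
  (forall l, (i < l <= j)%nat -> Rabs (G (INR l / INR n) (x l) - Gs) <= eps) ->
  Rabs (p j - p i + lam * ((INR j - INR i) / INR n) * Gs)
    <= lam * ((INR j - INR i) / INR n) * eps.
Proof.
  intros Hij Hl. pose proof INR_n_gt0.
  induction Hij as [|j Hij IH].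
  - replace (p i - p i + lam * ((INR i - INR i) / INR n) * Gs) with 0 by (field; lra).
    rewrite Rabs_R0. replace (lam * ((INR i - INR i) / INR n) * eps) with 0 by (field; lra).
    lra.
  - specialize (IH ltac:(intros l Hl'; apply Hl; lia)).
    pose proof (Hl (S j) ltac:(lia)) as Hg.
    rewrite scheme_p_S. set (g := G (INR (S j) / INR n) (x (S j))) in *. rewrite S_INR.
    replace (p j - lam / INR n * g - p i + lam * ((INR j + 1 - INR i) / INR n) * Gs)
      with ((p j - p i + lam * ((INR j - INR i) / INR n) * Gs) + - (lam / INR n) * (g - Gs))
      by (field; lra).
    replace (lam * ((INR j + 1 - INR i) / INR n) * eps)
      with (lam * ((INR j - INR i) / INR n) * eps + lam / INR n * eps) by (field; lra).
    eapply Rle_trans; [apply Rabs_triang|]. rewrite Rabs_mult, Rabs_Ropp.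
    rewrite (Rabs_pos_eq (lam / INR n)) by (apply Rlt_le, Rdiv_lt_0_compat; lra).
    enough (lam / INR n * Rabs (g - Gs) <= lam / INR n * eps) by lra.
    apply Rmult_le_compat_l; [apply Rlt_le, Rdiv_lt_0_compat|]; lra.
Qed.

Lemma scheme_p_increment_abs i j eps Gs :
  (forall l, (i < l <= j)%nat \/ (j < l <= i)%nat ->
     Rabs (G (INR l / INR n) (x l) - Gs) <= eps) ->
  Rabs (p j - p i + lam * ((INR j - INR i) / INR n) * Gs)
    <= lam * (Rabs (INR j - INR i) / INR n) * eps.
Proof.
  intros Hl. pose proof INR_n_gt0.
  destruct (Nat.le_ge_cases i j) as [Hij|Hji].
  - rewrite (Rabs_pos_eq (INR j - INR i)) by (apply le_INR in Hij; lra).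
    apply scheme_p_increment; auto.
  - replace (p j - p i + lam * ((INR j - INR i) / INR n) * Gs)
      with (- (p i - p j + lam * ((INR i - INR j) / INR n) * Gs)) by (field; lra).
    rewrite Rabs_Ropp, (Rabs_minus_sym (INR j)), (Rabs_pos_eq (INR i - INR j))
      by (apply le_INR in Hji; lra).
    apply scheme_p_increment; auto.
Qed.

Section BoundedNonlinearity.
Variables Rb Gm : R.
Hypothesis G_le : forall t y, y <= Rb -> G t y <= Gm.
Hypothesis s_range : 0 <= s <= Rb.

Lemma bound_ge0 : 0 <= Gm.
Proof. pose proof (G_le 0 (Rb - 1) ltac:(lra)). pose proof (G_ge0 0 (Rb - 1)). lra. Qed.

Lemma scheme_x_le_bound k : (k <= n)%nat -> x k <= Rb.
Proof.
  intros Hk. pose proof INR_n_gt0. pose proof (scheme_x_le k).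
  apply le_INR in Hk. pose proof (pos_INR k).
  assert (INR k / INR n <= 1) by (apply Rle_div_l; lra).
  assert (s * (INR k / INR n) <= s * 1) by (apply Rmult_le_compat_l; lra).
  lra.
Qed.

Lemma scheme_p_sub_le i j : (i <= j)%nat -> (j <= n)%nat ->
  0 <= p i - p j <= lam * Gm * ((INR j - INR i) / INR n).
Proof.
  intros Hij Hjn. pose proof (scheme_p_le i j Hij). pose proof INR_n_gt0.
  split; [lra|].
  induction Hij as [|j Hij IH].
  - replace ((INR i - INR i) / INR n) with 0 by (field; lra). lra.
  - rewrite scheme_p_S.
    specialize (IH ltac:(lia) (scheme_p_le i j Hij)).
    assert (G (INR (S j) / INR n) (x (S j)) <= Gm) by (apply G_le, scheme_x_le_bound; lia).
    assert (lam / INR n * G (INR (S j) / INR n) (x (S j)) <= lam / INR n * Gm)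
      by (apply Rmult_le_compat_l; [apply Rlt_le, Rdiv_lt_0_compat|]; lra).
    replace (lam * Gm * ((INR (S j) - INR i) / INR n))
      with (lam * Gm * ((INR j - INR i) / INR n) + lam / INR n * Gm)
      by (rewrite S_INR; field; lra).
    lra.
Qed.

Lemma scheme_p_ge k : (k <= n)%nat -> s - lam * Gm <= p k.
Proof.
  intros Hk. pose proof INR_n_gt0. pose proof bound_ge0.
  destruct (scheme_p_sub_le 0 k ltac:(lia) Hk) as [_ Hp].
  rewrite scheme_p_0, INR_0 in Hp. apply le_INR in Hk.
  assert ((INR k - 0) / INR n <= 1) by (apply Rle_div_l; lra).
  assert (lam * Gm * ((INR k - 0) / INR n) <= lam * Gm * 1)
    by (apply Rmult_le_compat_l; [apply Rmult_le_pos|]; lra).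
  lra.
Qed.

Lemma scheme_p_abs_le k : (k <= n)%nat -> Rabs (p k) <= Rb + lam * Gm.
Proof.
  intros Hk. pose proof (scheme_p_ge k Hk). pose proof (scheme_p_le_s k).
  pose proof bound_ge0. assert (0 <= lam * Gm) by (apply Rmult_le_pos; lra).
  apply Rabs_le_between; lra.
Qed.

Lemma scheme_x_lipschitz i j : (i <= n)%nat -> (j <= n)%nat ->
  Rabs (x j - x i) <= (Rb + lam * Gm) * (Rabs (INR j - INR i) / INR n).
Proof.
  intros Hi Hj. pose proof INR_n_gt0.
  assert (Hpk : forall k, (k <= n)%nat -> - (Rb + lam * Gm) <= p k <= Rb + lam * Gm)
    by (intros k Hk; apply Rabs_le_between, scheme_p_abs_le, Hk).
  destruct (Nat.le_ge_cases i j) as [Hij|Hji].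
  - destruct (scheme_x_sub_bounds i j Hij) as [Hl Hu].
    pose proof (Hpk i Hi). pose proof (Hpk j Hj).
    assert (Hd : 0 <= (INR j - INR i) / INR n)
      by (apply le_INR in Hij; apply Rdiv_le_0_compat; lra).
    rewrite (Rabs_pos_eq (INR j - INR i)) by (apply le_INR in Hij; lra).
    apply Rabs_le_between. unfold Rdiv in *; split; nra.
  - destruct (scheme_x_sub_bounds j i Hji) as [Hl Hu].
    pose proof (Hpk i Hi). pose proof (Hpk j Hj).
    assert (Hd : 0 <= (INR i - INR j) / INR n)
      by (apply le_INR in Hji; apply Rdiv_le_0_compat; lra).
    rewrite Rabs_minus_sym, (Rabs_minus_sym (INR j)).
    rewrite (Rabs_pos_eq (INR i - INR j)) by (apply le_INR in Hji; lra).
    apply Rabs_le_between. unfold Rdiv in *; split; nra.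
Qed.

Lemma scheme_x_taylor i j : (i <= n)%nat -> (j <= n)%nat ->
  Rabs (x j - x i - (INR j - INR i) / INR n * p i)
    <= lam * Gm * ((INR j - INR i) / INR n) ^ 2.
Proof.
  intros Hi Hj. pose proof INR_n_gt0.
  destruct (Nat.le_ge_cases i j) as [Hij|Hji].
  - destruct (scheme_x_sub_bounds i j Hij) as [Hl Hu].
    destruct (scheme_p_sub_le i j Hij Hj) as [Hp1 Hp2].
    assert (Hd : 0 <= (INR j - INR i) / INR n)
      by (apply le_INR in Hij; apply Rdiv_le_0_compat; lra).
    set (e := (INR j - INR i) / INR n) in *.
    assert (e * (p i - p j) <= e * (lam * Gm * e)) by (apply Rmult_le_compat_l; lra).
    assert (0 <= e * (p i - p j)) by (apply Rmult_le_pos; lra).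
    apply Rabs_le_between; simpl; nra.
  - destruct (scheme_x_sub_bounds j i Hji) as [Hl Hu].
    destruct (scheme_p_sub_le j i Hji Hi) as [Hp1 Hp2].
    assert (Hd : 0 <= (INR i - INR j) / INR n)
      by (apply le_INR in Hji; apply Rdiv_le_0_compat; lra).
    replace ((INR j - INR i) / INR n) with (- ((INR i - INR j) / INR n)) by (field; lra).
    set (e := (INR i - INR j) / INR n) in *.
    assert (e * (p j - p i) <= e * (lam * Gm * e)) by (apply Rmult_le_compat_l; lra).
    assert (0 <= e * (p j - p i)) by (apply Rmult_le_pos; lra).
    apply Rabs_le_between; simpl; nra.
Qed.

End BoundedNonlinearity.

Section SturmComparison.
Variables d M : R.
Hypothesis n_ge2 : (2 <= n)%nat.
Hypothesis lam_M_gt : 16 < lam * M.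
Hypothesis G_superlinear : forall t y, 0 < t < 1 -> 0 < y < d -> M * y <= G t y.
Hypothesis x_small : forall k, (1 <= k)%nat -> (k < n)%nat -> 0 <= x k < d.

Local Notation w := (sin_grid n).
Let c := 2 - 2 * cos (PI / INR n).
(* w is the first Dirichlet eigenvector of the second difference, with eigenvalue n^2 c < lam M,
   so the discrete Wronskian below decreases strictly from 0 while x stays in [0, d). *)
Let wronskian m := w m * x (S m) - x m * w (S m).

Let c_lt : c - lam * M / (INR n * INR n) < 0.
Proof.
  pose proof INR_n_gt0. pose proof (grid_eigenvalue_le n n_ge2).
  assert (16 / (INR n * INR n) < lam * M / (INR n * INR n))
    by (apply Rmult_lt_compat_r; [apply Rinv_0_lt_compat; nra | lra]).
  unfold c; lra.
Qed.

Let wronskian_step m : (S m < n)%nat ->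
  wronskian (S m) <= wronskian m + x (S m) * w (S m) * (c - lam * M / (INR n * INR n)).
Proof.
  intros Hm. pose proof INR_n_gt0. unfold wronskian.
  assert (Hdx : x (S (S m)) - 2 * x (S m) + x m
                = - (lam / (INR n * INR n)) * G (INR (S m) / INR n) (x (S m))).
  { rewrite (scheme_x_S (S m)), (scheme_p_S m), (scheme_x_S m). field. lra. }
  destruct (x_small (S m) ltac:(lia) Hm) as [Hx0 Hxd].
  assert (HG : M * x (S m) <= G (INR (S m) / INR n) (x (S m))).
  { destruct (Rle_lt_or_eq_dec 0 (x (S m)) Hx0) as [Hp|He].
    - apply G_superlinear; [|lra]. apply lt_INR in Hm. pose proof (pos_INR (S m)).
      split; [apply Rdiv_lt_0_compat; [apply lt_0_INR; lia| lra]| apply Rlt_div_l; lra].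
    - rewrite <- He, Rmult_0_r. apply G_ge0. }
  assert (Hws : 0 <= w (S m)) by (apply sin_grid_ge0; lia).
  assert (w (S m) * (lam / (INR n * INR n) * (M * x (S m)))
          <= w (S m) * (lam / (INR n * INR n) * G (INR (S m) / INR n) (x (S m)))).
  { apply Rmult_le_compat_l; [exact Hws|].
    apply Rmult_le_compat_l; [apply Rlt_le, Rdiv_lt_0_compat; nra | exact HG]. }
  assert (Eq : w (S m) * x (S (S m)) - x (S m) * w (S (S m)) - (w m * x (S m) - x m * w (S m))
    = w (S m) * (x (S (S m)) - 2 * x (S m) + x m)
      - x (S m) * (w (S (S m)) + w m - 2 * w (S m))) by ring.
  rewrite Hdx, (sin_grid_rec n n_ge2 m) in Eq. unfold c.
  replace (lam * M / (INR n * INR n)) with (lam / (INR n * INR n) * M) by (field; lra).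
  nra.
Qed.

Let wronskian_lt0 m : 0 < s -> (S m < n)%nat -> wronskian (S m) < 0.
Proof.
  intros Hs. pose proof INR_n_gt0. pose proof c_lt. induction m as [|m IH]; intros Hm.
  - pose proof (wronskian_step 0 Hm) as Hstep.
    assert (Hw0 : wronskian 0 = 0)
      by (unfold wronskian; rewrite sin_grid_0, scheme_x_0 by lia; ring).
    assert (Hx1 : 0 < x 1)
      by (rewrite scheme_x_S, scheme_x_0, scheme_p_0, Rplus_0_l; apply Rdiv_lt_0_compat; lra).
    assert (0 < w 1%nat) by (apply sin_grid_gt0; lia).
    assert (0 < x 1%nat * w 1%nat) by (apply Rmult_lt_0_compat; lra).
    nra.
  - pose proof (wronskian_step (S m) Hm). pose proof (IH ltac:(lia)).
    destruct (x_small (S (S m)) ltac:(lia) Hm).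
    assert (0 <= w (S (S m))) by (apply sin_grid_ge0; lia).
    assert (0 <= x (S (S m)) * w (S (S m))) by (apply Rmult_le_pos; lra).
    nra.
Qed.

Lemma scheme_x_n_lt0_of_small : 0 < s -> x n < 0.
Proof.
  intros Hs. pose proof (wronskian_lt0 (n - 2) Hs ltac:(lia)) as H.
  unfold wronskian in H. replace (S (S (n - 2))) with n in H by lia.
  rewrite sin_grid_n in H by lia.
  assert (0 < sin_grid n (S (n - 2))) by (apply sin_grid_gt0; lia).
  nra.
Qed.

End SturmComparison.

End Scheme.

Lemma scheme_continuous G n lam k : (forall t, continuity (G t)) ->
  continuity (fun s => scheme_x G n lam s k) /\ continuity (fun s => scheme_p G n lam s k).
Proof.
  intros G_cont. induction k as [|k [Hx Hp]].
  - split; [apply continuity_const; now intros | apply derivable_continuous, derivable_id].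
  - assert (Hx' : continuity (fun s => scheme_x G n lam s (S k))).
    { apply (continuity_plus (fun s => scheme_x G n lam s k)); [exact Hx|].
      apply (continuity_mult (fun s => scheme_p G n lam s k) (fun _ => / INR n)); [exact Hp|].
      apply continuity_const; now intros. }
    split; [exact Hx'|].
    apply (continuity_minus (fun s => scheme_p G n lam s k)); [exact Hp|].
    apply continuity_scal, (continuity_comp (fun s => scheme_x G n lam s (S k))); auto.
Qed.

Section Shooting.
Variable G : R -> R -> R.
Variable n : nat.
Variables lam Rb Gm d M : R.
Hypothesis G_ge0 : forall t y, 0 <= G t y.
Hypothesis G_cont : forall t, continuity (G t).
Hypothesis G_le : forall t y, y <= Rb -> G t y <= Gm.
Hypothesis G_superlinear : forall t y, 0 < t < 1 -> 0 < y < d -> M * y <= G t y.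
Hypothesis n_ge2 : (2 <= n)%nat.
Hypothesis lam_gt0 : 0 < lam.
Hypothesis lam_Gm_lt : lam * Gm < Rb.
Hypothesis lam_M_gt : 16 < lam * M.
Hypothesis d_range : 0 < d <= Rb.

Local Notation x s := (scheme_x G n lam s).

Lemma scheme_x_reaches s : 0 < s -> 0 <= x s n -> exists j, (j <= n)%nat /\ d <= x s j.
Proof.
  intros Hs Hxn. apply NNPP. intros Hnot.
  enough (x s n < 0) by lra.
  apply (scheme_x_n_lt0_of_small G n lam s G_ge0 ltac:(lia) lam_gt0 d M); auto.
  intros k Hk1 Hkn. split.
  - apply (scheme_x_ge0 G n lam s G_ge0 ltac:(lia)); auto; lia.
  - apply Rnot_le_lt. intros Hdk. apply Hnot. exists k. split; [lia | exact Hdk].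
Qed.

Lemma shooting_slope : { s | d / 2 <= s <= Rb /\ x s n = 0 }.
Proof.
  pose proof (INR_n_gt0 n ltac:(lia)).
  apply IVT; [apply scheme_continuous; exact G_cont | lra | |].
  - destruct (Rlt_le_dec (x (d / 2) n) 0) as [|Hge]; [assumption|].
    destruct (scheme_x_reaches (d / 2) ltac:(lra) Hge) as [j [Hj Hdj]].
    pose proof (scheme_x_le G n lam (d / 2) G_ge0 ltac:(lia) lam_gt0 j).
    apply le_INR in Hj.
    assert (INR j / INR n <= 1) by (apply Rle_div_l; lra).
    assert (d / 2 * (INR j / INR n) <= d / 2 * 1) by (apply Rmult_le_compat_l; lra).
    lra.
  - destruct (scheme_x_sub_bounds G n lam Rb G_ge0 ltac:(lia) lam_gt0 0 n ltac:(lia)) as [Hl _].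
    rewrite scheme_x_0, INR_0 in Hl.
    replace ((INR n - 0) / INR n) with 1 in Hl by (field; lra).
    pose proof (scheme_p_ge G n lam Rb G_ge0 ltac:(lia) lam_gt0 Rb Gm G_le ltac:(lra) n
                  ltac:(lia)).
    lra.
Qed.

Lemma shooting_solution_bounds s : d / 2 <= s <= Rb -> x s n = 0 ->
  forall k, (k <= n)%nat ->
  0 <= x s k <= Rb /\ d * (INR k / INR n) * (1 - INR k / INR n) <= x s k.
Proof.
  intros Hs Hxn k Hk. split; [split|].
  - apply (scheme_x_ge0 G n lam s G_ge0 ltac:(lia)); auto. lra.
  - apply (scheme_x_le_bound G n lam s G_ge0 ltac:(lia) lam_gt0 Rb); auto. lra.
  - destruct (scheme_x_reaches s ltac:(lra) ltac:(lra)) as [j [Hj Hdj]].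
    apply (scheme_x_ge_tent G n lam s G_ge0 ltac:(lia) lam_gt0 j d k); auto. lra.
Qed.

End Shooting.

Record free_ultrafilter (U : (nat -> Prop) -> Prop) : Prop := {
  uf_mono : forall A B : nat -> Prop, U A -> (forall n, A n -> B n) -> U B;
  uf_and : forall A B : nat -> Prop, U A -> U B -> U (fun n => A n /\ B n);
  uf_proper : ~ U (fun _ => False);
  uf_total : forall A : nat -> Prop, U A \/ U (fun n => ~ A n);
  uf_tail : forall N, U (fun n => (N <= n)%nat) }.

Lemma free_ultrafilter_exists : exists U, free_ultrafilter U.
Proof.
  destruct (filter.ultraFilterLemma (@filter.eventually_filter)) as [U [HU Hsub]].
  pose proof (@filter.ultra_proper _ _ HU) as HP.
  pose proof (@filter.filter_filter _ _ HP) as HF.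
  exists U. split.
  - intros A B HA HAB. exact (@filter.filterS _ _ HF A B HAB HA).
  - intros A B HA HB. exact (@filter.filterI _ _ HF A B HA HB).
  - exact (@filter.filter_not_empty _ _ HP).
  - intros A. exact (filter.in_ultra_setVsetC A HU).
  - intros N. apply Hsub. exists N; [exact I|].
    intros k Hk. exact (proj2 (Bool.reflect_iff _ _ ssrnat.leP) Hk).
Qed.

Definition ultra : (nat -> Prop) -> Prop :=
  proj1_sig (constructive_indefinite_description _ free_ultrafilter_exists).

Lemma ultra_free : free_ultrafilter ultra.
Proof. exact (proj2_sig (constructive_indefinite_description _ free_ultrafilter_exists)). Qed.

Lemma ultra_mono (A B : nat -> Prop) : ultra A -> (forall n, A n -> B n) -> ultra B.
Proof. apply uf_mono, ultra_free. Qed.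

Lemma ultra_and (A B : nat -> Prop) : ultra A -> ultra B -> ultra (fun n => A n /\ B n).
Proof. apply uf_and, ultra_free. Qed.

Lemma ultra_total (A : nat -> Prop) : ultra A \/ ultra (fun n => ~ A n).
Proof. apply uf_total, ultra_free. Qed.

Lemma ultra_tail N : ultra (fun n => (N <= n)%nat).
Proof. apply uf_tail, ultra_free. Qed.

Lemma ultra_ex (A : nat -> Prop) : ultra A -> exists m, A m.
Proof.
  intros HA. apply NNPP. intros Hnot. apply (uf_proper _ ultra_free).
  apply (ultra_mono A); [exact HA|]. intros m Hm. apply Hnot. exists m. exact Hm.
Qed.

Lemma ultra_all (A : nat -> Prop) : (forall m, A m) -> ultra A.
Proof. intros H. apply (ultra_mono _ _ (ultra_tail 0)). auto. Qed.

Definition ultra_lim (a : nat -> R) (A : R) : Prop :=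
  forall eps, 0 < eps -> ultra (fun m => Rabs (a m - A) < eps).

Definition bounded_seq (a : nat -> R) : Prop := exists B, forall m, Rabs (a m) <= B.

(* The limit is the supremum of the reals that [a] eventually exceeds along [ultra]. *)
Lemma ultra_lim_exists a : bounded_seq a -> exists A, ultra_lim a A.
Proof.
  intros [B HB].
  set (S := fun y => ultra (fun m => y <= a m)).
  assert (HSb : bound S).
  { exists B. intros y Hy. apply Rnot_lt_le. intros HBy. apply (uf_proper _ ultra_free).
    apply (ultra_mono _ _ Hy). intros m Hm. pose proof (Rabs_le_between (a m) B) as E.
    pose proof (proj1 E (HB m)). lra. }
  assert (HSne : exists y, S y).
  { exists (- B). apply ultra_all. intros m. apply (Rabs_le_between (a m) B), HB. }
  destruct (completeness S HSb HSne) as [L [Hub Hlub]].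
  exists L. intros eps Heps.
  assert (Hlow : ultra (fun m => L - eps < a m)).
  { apply NNPP. intros Hnot.
    enough (L <= L - eps) by lra.
    apply Hlub. intros y Hy. apply Rnot_lt_le. intros Hlt. apply Hnot.
    apply (ultra_mono _ _ Hy). intros m Hm. lra. }
  assert (Hup : ultra (fun m => a m < L + eps)).
  { destruct (ultra_total (fun m => L + eps / 2 <= a m)) as [Hu|Hu].
    - pose proof (Hub _ Hu). lra.
    - apply (ultra_mono _ _ Hu). intros m Hm. apply Rnot_le_lt in Hm. lra. }
  apply (ultra_mono _ _ (ultra_and _ _ Hlow Hup)). intros m [H1 H2].
  apply Rabs_def1; lra.
Qed.

Lemma ulim_def a : exists A, bounded_seq a -> ultra_lim a A.
Proof.
  destruct (classic (bounded_seq a)) as [Hb|Hb].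
  - destruct (ultra_lim_exists a Hb) as [A HA]. exists A. auto.
  - exists 0. intros Hb'. contradiction.
Qed.

Definition ulim (a : nat -> R) : R :=
  proj1_sig (constructive_indefinite_description _ (ulim_def a)).

Lemma ulimP a : bounded_seq a -> ultra_lim a (ulim a).
Proof. exact (proj2_sig (constructive_indefinite_description _ (ulim_def a))). Qed.

Definition mesh (m : nat) : R := / INR (S (S m)).

Lemma mesh_gt0 m : 0 < mesh m.
Proof. apply Rinv_0_lt_compat, lt_0_INR. lia. Qed.

Lemma mesh_le1 m : mesh m <= 1.
Proof.
  unfold mesh. rewrite <- Rinv_1. apply Rinv_le_contravar; [lra|].
  rewrite !S_INR. pose proof (pos_INR m). lra.
Qed.

Lemma ultra_mesh_small K eps : 0 < eps -> ultra (fun m => K * mesh m < eps).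
Proof.
  intros Heps. destruct (INR_unbounded (Rabs K / eps)) as [m0 Hm0].
  apply (ultra_mono _ _ (ultra_tail m0)). intros m Hm.
  apply le_INR in Hm. unfold mesh.
  assert (HI : INR m < INR (S (S m))) by (rewrite !S_INR; lra).
  assert (Hlt : Rabs K < eps * INR (S (S m))).
  { apply Rlt_div_l in Hm0; [|lra].
    assert (INR m0 * eps <= INR (S (S m)) * eps) by (apply Rmult_le_compat_r; lra).
    lra. }
  pose proof (RRle_abs K).
  apply Rlt_div_l; [apply lt_0_INR; lia|]. lra.
Qed.

Lemma ultra_lim_le a A B K : ultra_lim a A ->
  ultra (fun m => a m <= B + K * mesh m) -> A <= B.
Proof.
  intros HA HB. apply Rnot_lt_le. intros HBA.
  set (e := (A - B) / 2).
  destruct (ultra_ex _ (ultra_and _ _ (ultra_and _ _ (HA e ltac:(unfold e; lra)) HB)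
                          (ultra_mesh_small K e ltac:(unfold e; lra))))
    as [m [[H1 H2] H3]].
  apply Rabs_def2 in H1. unfold e in *. lra.
Qed.

Lemma ultra_lim_ge a A B K : ultra_lim a A ->
  ultra (fun m => B - K * mesh m <= a m) -> B <= A.
Proof.
  intros HA HB. apply Rnot_lt_le. intros HAB.
  set (e := (B - A) / 2).
  destruct (ultra_ex _ (ultra_and _ _ (ultra_and _ _ (HA e ltac:(unfold e; lra)) HB)
                          (ultra_mesh_small K e ltac:(unfold e; lra))))
    as [m [[H1 H2] H3]].
  apply Rabs_def2 in H1. unfold e in *. lra.
Qed.

Lemma bounded_seq_between a lo hi : (forall m, lo <= a m <= hi) -> bounded_seq a.
Proof.
  intros Ha. exists (Rabs lo + Rabs hi). intros m. specialize (Ha m).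
  pose proof (Rabs_pos lo). pose proof (Rabs_pos hi).
  pose proof (Rle_abs hi). pose proof (Rabs_maj2 lo).
  apply Rabs_le_between. lra.
Qed.

Lemma ulim_between a lo hi : (forall m, lo <= a m <= hi) ->
  ultra_lim a (ulim a) /\ lo <= ulim a <= hi.
Proof.
  intros Ha.
  assert (HA : ultra_lim a (ulim a)) by (eapply ulimP, bounded_seq_between, Ha).
  split; [exact HA | split].
  - apply (ultra_lim_ge a _ lo 0 HA), ultra_all. intros m. specialize (Ha m). lra.
  - apply (ultra_lim_le a _ hi 0 HA), ultra_all. intros m. specialize (Ha m). lra.
Qed.

Lemma ultra_lim_const c : ultra_lim (fun _ => c) c.
Proof. intros e He. apply ultra_all. intros m. rewrite Rminus_diag, Rabs_R0. exact He. Qed.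

Lemma ultra_lim_affine_bound a b c A B C al Kb K :
  ultra_lim a A -> ultra_lim b B -> ultra_lim c C ->
  ultra (fun m => Rabs (a m - b m - al * c m) <= Kb + K * mesh m) ->
  Rabs (A - B - al * C) <= Kb.
Proof.
  intros HA HB HC HU. apply Rnot_lt_le. intros Hlt.
  set (D := Rabs (A - B - al * C)) in *.
  pose proof (Rabs_pos al).
  set (e := (D - Kb) / (2 * (2 + Rabs al))).
  assert (He : 0 < e) by (apply Rdiv_lt_0_compat; lra).
  destruct (ultra_ex _ (ultra_and _ _ (ultra_and _ _ (ultra_and _ _ (HA e He) (HB e He))
             (ultra_and _ _ (HC e He) HU)) (ultra_mesh_small K ((D - Kb) / 2) ltac:(lra))))
    as [m [[[Ha Hb] [Hc Hm]] Hk]].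
  assert (Hdiff : D <= Rabs (a m - b m - al * c m) + (2 + Rabs al) * e).
  { unfold D.
    replace (A - B - al * C) with ((a m - b m - al * c m) + - (a m - A) + (b m - B)
                                   + al * (c m - C)) by ring.
    pose proof (Rabs_triang ((a m - b m - al * c m) + - (a m - A) + (b m - B))
                  (al * (c m - C))).
    pose proof (Rabs_triang ((a m - b m - al * c m) + - (a m - A)) (b m - B)).
    pose proof (Rabs_triang (a m - b m - al * c m) (- (a m - A))).
    rewrite Rabs_mult in *. rewrite Rabs_Ropp in *.
    assert (Rabs al * Rabs (c m - C) <= Rabs al * e) by (apply Rmult_le_compat_l; lra).
    lra. }
  assert ((2 + Rabs al) * e = (D - Kb) / 2) by (unfold e; field; lra).
  lra.
Qed.

Lemma continuous_rect_bounded (F : R -> R -> R) a b c e :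
  (forall t y, a <= t <= b -> c <= y <= e -> forall eps, 0 < eps -> exists del, 0 < del /\
     forall t' y', a <= t' <= b -> c <= y' <= e -> Rabs (t' - t) < del -> Rabs (y' - y) < del ->
     Rabs (F t' y' - F t y) < eps) ->
  exists B, forall t y, a <= t <= b -> c <= y <= e -> F t y <= B.
Proof.
  intros Hc. apply NNPP. intros Hnot.
  assert (Hs : forall k : nat, exists ty : R * R,
             (a <= fst ty <= b /\ c <= snd ty <= e) /\ INR k < F (fst ty) (snd ty)).
  { intros k. apply NNPP. intros Hk. apply Hnot. exists (INR k). intros t y Ht Hy.
    apply Rnot_lt_le. intros Hlt. apply Hk. exists (t, y). auto. }
  destruct (functional_choice _ Hs) as [ty Hty].
  destruct (ulim_between (fun k => fst (ty k)) a b ltac:(intros k; apply Hty)) as [HT HTr].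
  destruct (ulim_between (fun k => snd (ty k)) c e ltac:(intros k; apply Hty)) as [HY HYr].
  set (T := ulim (fun k => fst (ty k))) in *. set (Y := ulim (fun k => snd (ty k))) in *.
  destruct (Hc T Y HTr HYr 1 ltac:(lra)) as [del [Hdel Hd]].
  destruct (INR_unbounded (F T Y + 1)) as [k0 Hk0].
  destruct (ultra_ex _ (ultra_and _ _ (ultra_and _ _ (HT del Hdel) (HY del Hdel))
                          (ultra_tail k0))) as [k [[H1 H2] H3]].
  destruct (Hty k) as [[Ht Hy] Hf].
  pose proof (Hd _ _ Ht Hy H1 H2) as Hf2. apply Rabs_def2 in Hf2.
  apply le_INR in H3. lra.
Qed.

Definition grid_index (n : nat) (t : R) : nat := Z.to_nat (Int_part (t * INR n)).

Lemma grid_index_spec n t : (1 <= n)%nat -> 0 <= t <= 1 ->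
  (grid_index n t <= n)%nat /\
  INR (grid_index n t) / INR n <= t < INR (grid_index n t) / INR n + / INR n.
Proof.
  intros Hn Ht. unfold grid_index. destruct (base_Int_part (t * INR n)) as [H1 H2].
  assert (Hnp : 0 < INR n) by (apply lt_0_INR; lia).
  assert (Hz : (0 <= Int_part (t * INR n))%Z).
  { assert (IZR (-1) < IZR (Int_part (t * INR n))) by (assert (0 <= t * INR n) by nra; lra).
    apply lt_IZR in H. lia. }
  assert (HI : INR (Z.to_nat (Int_part (t * INR n))) = IZR (Int_part (t * INR n)))
    by (rewrite INR_IZR_INZ, Z2Nat.id by exact Hz; reflexivity).
  rewrite HI. split; [apply INR_le; rewrite HI; nra|].
  split; [apply Rle_div_l; lra|].
  replace (IZR (Int_part (t * INR n)) / INR n + / INR n)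
    with ((IZR (Int_part (t * INR n)) + 1) / INR n) by (field; lra).
  apply Rlt_div_r; lra.
Qed.

Lemma grid_index_0 n : (1 <= n)%nat -> grid_index n 0 = 0%nat.
Proof.
  intros Hn. destruct (grid_index_spec n 0 Hn ltac:(lra)) as [_ [H _]].
  apply Rle_div_l in H; [|apply lt_0_INR; lia].
  pose proof (pos_INR (grid_index n 0)). apply INR_eq. simpl. lra.
Qed.

Lemma grid_index_1 n : (1 <= n)%nat -> grid_index n 1 = n.
Proof.
  intros Hn. destruct (grid_index_spec n 1 Hn ltac:(lra)) as [Hle [_ H]].
  assert (Hnp : 0 < INR n) by (apply lt_0_INR; lia).
  replace (INR (grid_index n 1) / INR n + / INR n) with ((INR (grid_index n 1) + 1) / INR n)
    in H by (field; lra).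
  apply Rlt_div_r in H; [|lra]. rewrite Rmult_1_l, <- S_INR in H.
  apply INR_lt in H. lia.
Qed.

Lemma derivable_pt_lim_of_estimate f x l :
  (forall eps, 0 < eps -> exists del, 0 < del /\ forall y, Rabs (y - x) < del ->
     Rabs (f y - f x - (y - x) * l) <= eps * Rabs (y - x)) ->
  derivable_pt_lim f x l.
Proof.
  intros H eps Heps. destruct (H (eps / 2) ltac:(lra)) as [del [Hdel Hd]].
  exists (mkposreal del Hdel). intros h Hh0 Hh. simpl in Hh.
  pose proof (Hd (x + h) ltac:(replace (x + h - x) with h by ring; exact Hh)) as Q.
  replace (x + h - x) with h in Q by ring.
  assert (Hpos : 0 < Rabs h) by (apply Rabs_pos_lt; auto).
  replace ((f (x + h) - f x) / h - l) with ((f (x + h) - f x - h * l) / h) by (field; auto).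
  rewrite Rabs_div by exact Hh0. apply Rlt_div_l; [exact Hpos|]. nra.
Qed.

Lemma continuity_pt_of_estimate f x :
  (forall eps, 0 < eps -> exists del, 0 < del /\
     forall y, Rabs (y - x) < del -> Rabs (f y - f x) < eps) ->
  continuity_pt f x.
Proof.
  intros H eps Heps. destruct (H eps Heps) as [del [Hdel Hd]].
  exists del. split; [exact Hdel|]. intros y [_ Hy]. apply Hd, Hy.
Qed.

Definition solves_ode (G : R -> R -> R) (lam : R) (u v : R -> R) : Prop :=
  forall t, 0 < t < 1 ->
    derivable_pt_lim u t (v t) /\ derivable_pt_lim v t (- lam * G t (u t)) /\
    continuity_pt (fun y => G y (u y)) t.

Section LimitSolution.
Variable G : R -> R -> R.
Variables Rb Gm lam d M : R.
Hypothesis G_ge0 : forall t y, 0 <= G t y.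
Hypothesis G_cont : forall t y eps, 0 < eps -> exists del, 0 < del /\
  forall t' y', Rabs (t' - t) < del -> Rabs (y' - y) < del -> Rabs (G t' y' - G t y) < eps.
Hypothesis G_le : forall t y, y <= Rb -> G t y <= Gm.
Hypothesis G_superlinear : forall t y, 0 < t < 1 -> 0 < y < d -> M * y <= G t y.
Hypothesis Gm_gt0 : 0 < Gm.
Hypothesis lam_gt0 : 0 < lam.
Hypothesis lam_Gm_lt : lam * Gm < Rb.
Hypothesis lam_M_gt : 16 < lam * M.
Hypothesis d_range : 0 < d <= Rb.

Let G_cont_y t : continuity (G t).
Proof.
  intros y. apply continuity_pt_of_estimate. intros eps Heps.
  destruct (G_cont t y eps Heps) as [del [Hdel H]]. exists del. split; [exact Hdel|].
  intros y' Hy'. apply H; [|exact Hy']. rewrite Rminus_diag, Rabs_R0. exact Hdel.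
Qed.

Let grid_ge2 m : (2 <= S (S m))%nat. Proof. lia. Qed.
Let grid_ge1 m : (1 <= S (S m))%nat. Proof. lia. Qed.
Let grid_gt0 m : 0 < INR (S (S m)). Proof. apply lt_0_INR; lia. Qed.

(* Grid number m has n = m + 2 intervals, hence step [mesh m] and n >= 2. *)
Definition slope (m : nat) : R :=
  proj1_sig (shooting_slope G (S (S m)) lam Rb Gm d M G_ge0 G_cont_y G_le G_superlinear
               (grid_ge2 m) lam_gt0 lam_Gm_lt lam_M_gt d_range).

Lemma slope_spec m : d / 2 <= slope m <= Rb /\ scheme_x G (S (S m)) lam (slope m) (S (S m)) = 0.
Proof. exact (proj2_sig (shooting_slope _ _ _ _ _ _ _ _ _ _ _ _ _ _ _ _)). Qed.

Definition grid_x m t := scheme_x G (S (S m)) lam (slope m) (grid_index (S (S m)) t).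
Definition grid_p m t := scheme_p G (S (S m)) lam (slope m) (grid_index (S (S m)) t).
Definition usol t := ulim (fun m => grid_x m t).
Definition vsol t := ulim (fun m => grid_p m t).

Let lip := Rb + lam * Gm.

Let lip_gt0 : 0 < lip.
Proof. unfold lip. assert (0 < lam * Gm) by (apply Rmult_lt_0_compat; lra). lra. Qed.

Let slope_range m : 0 <= slope m <= Rb.
Proof. destruct (slope_spec m). lra. Qed.

Let grid_index_le m t : 0 <= t <= 1 -> (grid_index (S (S m)) t <= S (S m))%nat.
Proof. intros Ht. apply (grid_index_spec _ t (grid_ge1 m) Ht). Qed.

Lemma grid_point_bounds m t : 0 <= t <= 1 ->
  INR (grid_index (S (S m)) t) / INR (S (S m)) <= t
  < INR (grid_index (S (S m)) t) / INR (S (S m)) + mesh m.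
Proof. intros Ht. apply (grid_index_spec _ t (grid_ge1 m) Ht). Qed.

Lemma grid_diff_approx m t y : 0 <= t <= 1 -> 0 <= y <= 1 ->
  Rabs ((INR (grid_index (S (S m)) y) - INR (grid_index (S (S m)) t)) / INR (S (S m)) - (y - t))
    <= mesh m.
Proof.
  intros Ht Hy. pose proof (grid_point_bounds m t Ht). pose proof (grid_point_bounds m y Hy).
  pose proof (grid_gt0 m).
  set (k := INR (grid_index (S (S m)) t)) in *. set (k' := INR (grid_index (S (S m)) y)) in *.
  replace ((k' - k) / INR (S (S m)) - (y - t))
    with (k' / INR (S (S m)) - k / INR (S (S m)) - (y - t)) by (field; lra).
  apply Rabs_le_between. split; lra.
Qed.

Lemma grid_diff_abs_le m t y : 0 <= t <= 1 -> 0 <= y <= 1 ->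
  Rabs (INR (grid_index (S (S m)) y) - INR (grid_index (S (S m)) t)) / INR (S (S m))
    <= Rabs (y - t) + mesh m.
Proof.
  intros Ht Hy. pose proof (grid_diff_approx m t y Ht Hy). pose proof (grid_gt0 m).
  set (k := INR (grid_index (S (S m)) t)) in *. set (k' := INR (grid_index (S (S m)) y)) in *.
  replace (Rabs (k' - k) / INR (S (S m))) with (Rabs ((k' - k) / INR (S (S m))))
    by (rewrite Rabs_div, (Rabs_pos_eq (INR (S (S m)))); lra).
  pose proof (Rabs_triang ((k' - k) / INR (S (S m)) - (y - t)) (y - t)) as Htri.
  replace ((k' - k) / INR (S (S m)) - (y - t) + (y - t)) with ((k' - k) / INR (S (S m)))
    in Htri by ring.
  lra.
Qed.

Lemma grid_x_bounds m t : 0 <= t <= 1 -> 0 <= grid_x m t <= Rb /\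
  d * t * (1 - t) - d * mesh m <= grid_x m t.
Proof.
  intros Ht. destruct (slope_spec m) as [Hs Hn].
  destruct (shooting_solution_bounds G (S (S m)) lam Rb d M G_ge0 G_superlinear (grid_ge2 m)
              lam_gt0 lam_M_gt d_range (slope m) Hs Hn _ (grid_index_le m t Ht)) as [Hb Htent].
  split; [exact Hb|].
  pose proof (grid_point_bounds m t Ht). pose proof (mesh_gt0 m). pose proof (mesh_le1 m).
  set (r := INR (grid_index (S (S m)) t) / INR (S (S m))) in *.
  assert (0 <= r) by (apply Rdiv_le_0_compat; [apply pos_INR | apply grid_gt0]).
  assert (Hq : t * (1 - t) - mesh m <= r * (1 - r)) by nra.
  unfold grid_x. fold r. nra.
Qed.

Lemma grid_p_abs_le m t : 0 <= t <= 1 -> Rabs (grid_p m t) <= lip.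
Proof.
  intros Ht. apply (scheme_p_abs_le G (S (S m)) lam (slope m) G_ge0 (grid_ge1 m) lam_gt0 Rb Gm
                      G_le (slope_range m)), grid_index_le, Ht.
Qed.

Lemma usol_lim t : 0 <= t <= 1 -> ultra_lim (fun m => grid_x m t) (usol t) /\ 0 <= usol t <= Rb.
Proof. intros Ht. apply ulim_between. intros m. apply grid_x_bounds, Ht. Qed.

Lemma vsol_lim t : 0 <= t <= 1 -> ultra_lim (fun m => grid_p m t) (vsol t).
Proof.
  intros Ht. apply ulimP. exists lip. intros m. apply grid_p_abs_le, Ht.
Qed.

Lemma usol_ge_tent t : 0 <= t <= 1 -> d * t * (1 - t) <= usol t.
Proof.
  intros Ht. apply (ultra_lim_ge _ _ _ d (proj1 (usol_lim t Ht))), ultra_all.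
  intros m. apply grid_x_bounds, Ht.
Qed.

Lemma usol_pos t : 0 < t < 1 -> 0 < usol t.
Proof.
  intros Ht. pose proof (usol_ge_tent t ltac:(lra)).
  assert (0 < d * t * (1 - t)) by (apply Rmult_lt_0_compat; [apply Rmult_lt_0_compat|]; lra).
  lra.
Qed.

Lemma usol_0 : usol 0 = 0.
Proof.
  enough (0 <= usol 0 <= 0) by lra. apply ulim_between. intros m.
  unfold grid_x. rewrite grid_index_0 by lia. rewrite scheme_x_0. lra.
Qed.

Lemma usol_1 : usol 1 = 0.
Proof.
  enough (0 <= usol 1 <= 0) by lra. apply ulim_between. intros m.
  unfold grid_x. rewrite grid_index_1 by lia. rewrite (proj2 (slope_spec m)). lra.
Qed.

Lemma usol_lipschitz t y : 0 <= t <= 1 -> 0 <= y <= 1 ->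
  Rabs (usol y - usol t) <= lip * Rabs (y - t).
Proof.
  intros Ht Hy.
  replace (usol y - usol t) with (usol y - usol t - 0 * 0) by ring.
  apply (ultra_lim_affine_bound (fun m => grid_x m y) (fun m => grid_x m t) (fun _ => 0)
           _ _ _ 0 _ lip (proj1 (usol_lim y Hy)) (proj1 (usol_lim t Ht)) (ultra_lim_const 0)).
  apply ultra_all. intros m. rewrite Rmult_0_l, Rminus_0_r.
  eapply Rle_trans.
  { apply (scheme_x_lipschitz G (S (S m)) lam (slope m) G_ge0 (grid_ge1 m) lam_gt0 Rb Gm G_le
             (slope_range m)); apply grid_index_le; assumption. }
  pose proof (grid_diff_abs_le m t y Ht Hy). fold lip.
  rewrite <- Rmult_plus_distr_l. apply Rmult_le_compat_l; lra.
Qed.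

Lemma usol_taylor t y : 0 <= t <= 1 -> 0 <= y <= 1 ->
  Rabs (usol y - usol t - (y - t) * vsol t) <= lam * Gm * (y - t) ^ 2.
Proof.
  intros Ht Hy.
  apply (ultra_lim_affine_bound (fun m => grid_x m y) (fun m => grid_x m t) (fun m => grid_p m t)
           _ _ _ _ _ (3 * (lam * Gm) + lip) (proj1 (usol_lim y Hy)) (proj1 (usol_lim t Ht))
           (vsol_lim t Ht)).
  apply ultra_all. intros m.
  pose proof (scheme_x_taylor G (S (S m)) lam (slope m) G_ge0 (grid_ge1 m) lam_gt0 Rb Gm G_le
                (slope_range m) _ _ (grid_index_le m t Ht) (grid_index_le m y Hy)) as T.
  fold (grid_x m t) (grid_x m y) (grid_p m t) in T.
  pose proof (grid_diff_approx m t y Ht Hy) as D. pose proof (grid_p_abs_le m t Ht) as P.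
  set (dk := (INR (grid_index (S (S m)) y) - INR (grid_index (S (S m)) t)) / INR (S (S m))) in *.
  set (e := dk - (y - t)) in *.
  pose proof (mesh_gt0 m). pose proof (mesh_le1 m).
  replace (grid_x m y - grid_x m t - (y - t) * grid_p m t)
    with ((grid_x m y - grid_x m t - dk * grid_p m t) + e * grid_p m t) by (unfold e; ring).
  eapply Rle_trans; [apply Rabs_triang|]. rewrite Rabs_mult.
  assert (Rabs e * Rabs (grid_p m t) <= mesh m * lip)
    by (apply Rmult_le_compat; auto; apply Rabs_pos).
  assert (dk ^ 2 <= (y - t) ^ 2 + 3 * mesh m).
  { replace dk with ((y - t) + e) by (unfold e; ring).
    apply Rabs_le_between in D. nra. }
  assert (0 <= lam * Gm) by (apply Rmult_le_pos; lra).
  assert (lam * Gm * dk ^ 2 <= lam * Gm * ((y - t) ^ 2 + 3 * mesh m))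
    by (apply Rmult_le_compat_l; auto).
  nra.
Qed.

Lemma grid_between_close m t y l : 0 <= t <= 1 -> 0 <= y <= 1 ->
  let k := grid_index (S (S m)) t in let k' := grid_index (S (S m)) y in
  (k < l <= k')%nat \/ (k' < l <= k)%nat ->
  Rabs (INR l / INR (S (S m)) - t) <= Rabs (y - t) + mesh m /\
  Rabs (scheme_x G (S (S m)) lam (slope m) l - grid_x m t) <= lip * (Rabs (y - t) + mesh m).
Proof.
  intros Ht Hy k k' Hl.
  pose proof (grid_point_bounds m t Ht) as Gt. pose proof (grid_point_bounds m y Hy) as Gy.
  pose proof (grid_gt0 m). fold k k' in Gt, Gy.
  assert (Hl_le : (l <= S (S m))%nat)
    by (pose proof (grid_index_le m t Ht); pose proof (grid_index_le m y Hy); lia).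
  assert (Hdist : Rabs (INR l / INR (S (S m)) - t) <= Rabs (y - t) + mesh m /\
                  Rabs (INR l - INR k) / INR (S (S m)) <= Rabs (y - t) + mesh m).
  { replace (Rabs (INR l - INR k) / INR (S (S m)))
      with (Rabs (INR l / INR (S (S m)) - INR k / INR (S (S m))))
      by (replace (INR l / INR (S (S m)) - INR k / INR (S (S m)))
            with ((INR l - INR k) / INR (S (S m))) by (field; lra);
          rewrite Rabs_div, (Rabs_pos_eq (INR (S (S m)))); lra).
    assert (Hmono : forall i j, (i < j)%nat -> INR i / INR (S (S m)) < INR j / INR (S (S m))).
    { intros i j Hij. apply Rmult_lt_compat_r; [apply Rinv_0_lt_compat; lra | apply lt_INR, Hij]. }
    assert (Hmono' : forall i j, (i <= j)%nat -> INR i / INR (S (S m)) <= INR j / INR (S (S m))).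
    { intros i j Hij.
      apply Rmult_le_compat_r; [apply Rlt_le, Rinv_0_lt_compat; lra | apply le_INR, Hij]. }
    pose proof (Rle_abs (y - t)). pose proof (Rabs_maj2 (y - t)).
    destruct Hl as [[Hl1 Hl2]|[Hl1 Hl2]];
      pose proof (Hmono _ _ Hl1); pose proof (Hmono' _ _ Hl2);
      split; apply Rabs_le_between; split; lra. }
  split; [apply Hdist|].
  eapply Rle_trans.
  { apply (scheme_x_lipschitz G (S (S m)) lam (slope m) G_ge0 (grid_ge1 m) lam_gt0 Rb Gm G_le
             (slope_range m)); [apply grid_index_le, Ht | exact Hl_le]. }
  apply Rmult_le_compat_l; [lra | apply Hdist].
Qed.

Lemma grid_slope_increment m t y eps Gs : 0 <= t <= 1 -> 0 <= y <= 1 -> 0 < eps ->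
  (forall l, let k := grid_index (S (S m)) t in let k' := grid_index (S (S m)) y in
     (k < l <= k')%nat \/ (k' < l <= k)%nat ->
     Rabs (G (INR l / INR (S (S m))) (scheme_x G (S (S m)) lam (slope m) l) - Gs) <= eps) ->
  Rabs (grid_p m y - grid_p m t - (y - t) * (- lam * Gs))
    <= lam * eps * Rabs (y - t) + (lam * eps + lam * Rabs Gs) * mesh m.
Proof.
  intros Ht Hy Heps Hl.
  pose proof (scheme_p_increment_abs G (S (S m)) lam (slope m) (grid_ge1 m) lam_gt0
                _ _ eps Gs Hl) as Hinc.
  fold (grid_p m t) (grid_p m y) in Hinc.
  pose proof (grid_diff_approx m t y Ht Hy) as D.
  pose proof (grid_diff_abs_le m t y Ht Hy) as DA.
  set (dk := (INR (grid_index (S (S m)) y) - INR (grid_index (S (S m)) t)) / INR (S (S m)))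
    in *.
  replace (grid_p m y - grid_p m t - (y - t) * (- lam * Gs))
    with ((grid_p m y - grid_p m t + lam * dk * Gs) + lam * Gs * ((y - t) - dk)) by ring.
  eapply Rle_trans; [apply Rabs_triang|]. rewrite !Rabs_mult, (Rabs_pos_eq lam) by lra.
  rewrite Rabs_minus_sym in D.
  assert (lam * (Rabs (INR (grid_index (S (S m)) y) - INR (grid_index (S (S m)) t))
                 / INR (S (S m))) * eps <= lam * (Rabs (y - t) + mesh m) * eps)
    by (apply Rmult_le_compat_r; [lra | apply Rmult_le_compat_l; lra]).
  assert (lam * Rabs Gs * Rabs (y - t - dk) <= lam * Rabs Gs * mesh m)
    by (apply Rmult_le_compat_l; [apply Rmult_le_pos; [lra | apply Rabs_pos] | exact D]).
  nra.
Qed.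

Lemma vsol_estimate t eps : 0 < t < 1 -> 0 < eps -> exists del, 0 < del /\
  forall y, Rabs (y - t) < del ->
  Rabs (vsol y - vsol t - (y - t) * (- lam * G t (usol t))) <= lam * eps * Rabs (y - t).
Proof.
  intros Ht Heps. set (Gs := G t (usol t)).
  destruct (G_cont t (usol t) eps Heps) as [d1 [Hd1 Hc]].
  exists (Rmin (d1 / (2 * (lip + 1))) (Rmin t (1 - t))).
  split; [apply Rmin_glb_lt; [apply Rdiv_lt_0_compat; lra | apply Rmin_glb_lt; lra]|].
  intros y Hy.
  pose proof (Rmin_l (d1 / (2 * (lip + 1))) (Rmin t (1 - t))).
  pose proof (Rmin_r (d1 / (2 * (lip + 1))) (Rmin t (1 - t))).
  pose proof (Rmin_l t (1 - t)). pose proof (Rmin_r t (1 - t)).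
  assert (Hy01 : 0 <= y <= 1) by (apply Rabs_def2 in Hy; lra).
  assert (Ht01 : 0 <= t <= 1) by lra.
  assert (Hyd : (lip + 1) * Rabs (y - t) <= d1 / 2).
  { assert ((lip + 1) * Rabs (y - t) <= (lip + 1) * (d1 / (2 * (lip + 1))))
      by (apply Rmult_le_compat_l; lra).
    replace ((lip + 1) * (d1 / (2 * (lip + 1)))) with (d1 / 2) in H3 by (field; lra).
    exact H3. }
  replace ((y - t) * (- lam * Gs)) with (((y - t) * (- lam * Gs)) * 1) by ring.
  apply (ultra_lim_affine_bound (fun m => grid_p m y) (fun m => grid_p m t) (fun _ => 1)
           _ _ 1 _ _ (lam * eps + lam * Rabs Gs) (vsol_lim y Hy01) (vsol_lim t Ht01)
           (ultra_lim_const 1)).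
  apply (ultra_mono _ _ (ultra_and _ _ (ultra_mesh_small (lip + 1) (d1 / 4) ltac:(lra))
                                       (proj1 (usol_lim t Ht01) (d1 / 4) ltac:(lra)))).
  intros m [Hmesh Hxt]. rewrite Rmult_1_r.
  apply grid_slope_increment; [exact Ht01 | exact Hy01 | exact Heps|].
  intros l k k' Hl. apply Rlt_le, Hc.
  - destruct (grid_between_close m t y l Ht01 Hy01 Hl) as [Hlt _].
    pose proof (Rabs_pos (y - t)). pose proof (mesh_gt0 m). nra.
  - destruct (grid_between_close m t y l Ht01 Hy01 Hl) as [_ Hlx].
    pose proof (Rabs_triang (scheme_x G (S (S m)) lam (slope m) l - grid_x m t)
                  (grid_x m t - usol t)) as Htri.
    replace (scheme_x G (S (S m)) lam (slope m) l - grid_x m t + (grid_x m t - usol t))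
      with (scheme_x G (S (S m)) lam (slope m) l - usol t) in Htri by ring.
    pose proof (Rabs_pos (y - t)). pose proof (mesh_gt0 m). nra.
Qed.

Lemma usol_derivative t : 0 < t < 1 -> derivable_pt_lim usol t (vsol t).
Proof.
  intros Ht. apply derivable_pt_lim_of_estimate. intros eps Heps.
  assert (HlG : 0 < lam * Gm) by (apply Rmult_lt_0_compat; lra).
  exists (Rmin (eps / (lam * Gm)) (Rmin t (1 - t))).
  split; [apply Rmin_glb_lt; [apply Rdiv_lt_0_compat; lra | apply Rmin_glb_lt; lra]|].
  intros y Hy.
  pose proof (Rmin_l (eps / (lam * Gm)) (Rmin t (1 - t))).
  pose proof (Rmin_r (eps / (lam * Gm)) (Rmin t (1 - t))).
  pose proof (Rmin_l t (1 - t)). pose proof (Rmin_r t (1 - t)).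
  assert (Hy01 : 0 <= y <= 1) by (apply Rabs_def2 in Hy; lra).
  eapply Rle_trans; [apply usol_taylor; lra|].
  rewrite <- pow2_abs. simpl. rewrite Rmult_1_r.
  assert (lam * Gm * Rabs (y - t) <= eps).
  { assert (Rabs (y - t) <= eps / (lam * Gm)) by lra.
    apply Rle_div_r in H3; [lra | exact HlG]. }
  pose proof (Rabs_pos (y - t)). nra.
Qed.

Lemma vsol_derivative t : 0 < t < 1 -> derivable_pt_lim vsol t (- lam * G t (usol t)).
Proof.
  intros Ht. apply derivable_pt_lim_of_estimate. intros eps Heps.
  destruct (vsol_estimate t (eps / lam) Ht ltac:(apply Rdiv_lt_0_compat; lra))
    as [del [Hdel H]].
  exists del. split; [exact Hdel|]. intros y Hy.
  specialize (H y Hy). replace (lam * (eps / lam)) with eps in H by (field; lra). exact H.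
Qed.

Lemma usol_continuous : continuous_on_01 usol.
Proof.
  intros t Ht eps Heps. exists (eps / (lip + 1)). split; [apply Rdiv_lt_0_compat; lra|].
  intros y Hy Hyt. eapply Rle_lt_trans; [apply usol_lipschitz; assumption|].
  apply Rlt_div_r in Hyt; [|lra]. pose proof (Rabs_pos (y - t)). nra.
Qed.

Lemma G_usol_continuous t : 0 < t < 1 -> continuity_pt (fun y => G y (usol y)) t.
Proof.
  intros Ht. apply continuity_pt_of_estimate. intros eps Heps.
  destruct (G_cont t (usol t) eps Heps) as [d1 [Hd1 Hc]].
  destruct (usol_continuous t ltac:(lra) d1 Hd1) as [d2 [Hd2 Hu]].
  exists (Rmin d1 (Rmin d2 (Rmin t (1 - t)))).
  split; [repeat apply Rmin_glb_lt; lra|].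
  intros y Hy.
  pose proof (Rmin_l d1 (Rmin d2 (Rmin t (1 - t)))).
  pose proof (Rmin_r d1 (Rmin d2 (Rmin t (1 - t)))).
  pose proof (Rmin_l d2 (Rmin t (1 - t))). pose proof (Rmin_r d2 (Rmin t (1 - t))).
  pose proof (Rmin_l t (1 - t)). pose proof (Rmin_r t (1 - t)).
  assert (Hy01 : 0 <= y <= 1) by (apply Rabs_def2 in Hy; lra).
  apply Hc; [lra | apply Hu; [exact Hy01 | lra]].
Qed.

Lemma limit_solution_exists : exists u v,
  continuous_on_01 u /\ u 0 = 0 /\ u 1 = 0 /\ (forall t, 0 < t < 1 -> 0 < u t) /\
  (forall t, 0 <= t <= 1 -> u t <= Rb) /\ solves_ode G lam u v.
Proof.
  exists usol, vsol.
  split; [exact usol_continuous|]. split; [exact usol_0|]. split; [exact usol_1|].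
  split; [exact usol_pos|]. split; [intros t Ht; apply (usol_lim t Ht)|].
  intros t Ht. split; [|split]; [apply usol_derivative | apply vsol_derivative |
                                 apply G_usol_continuous]; exact Ht.
Qed.

End LimitSolution.

Theorem small_lambda_solution (G : R -> R -> R) (Rb : R) :
  0 < Rb ->
  (forall t y, 0 <= G t y) ->
  (forall t y eps, 0 < eps -> exists del, 0 < del /\
    forall t' y', Rabs (t' - t) < del -> Rabs (y' - y) < del -> Rabs (G t' y' - G t y) < eps) ->
  (exists Gm, forall t y, y <= Rb -> G t y <= Gm) ->
  (forall M, exists d, 0 < d /\ forall t y, 0 < t < 1 -> 0 < y < d -> M * y <= G t y) ->
  exists lamR, 0 < lamR /\ forall lam, 0 < lam -> lam < lamR ->
  exists u v,
    continuous_on_01 u /\ u 0 = 0 /\ u 1 = 0 /\ (forall t, 0 < t < 1 -> 0 < u t) /\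
    (forall t, 0 <= t <= 1 -> u t <= Rb) /\ solves_ode G lam u v.
Proof.
  intros HRb G_ge0 G_cont [Gm0 G_le0] G_superlinear.
  set (Gm := Rmax Gm0 1).
  assert (HGm : 0 < Gm) by (pose proof (Rmax_r Gm0 1); unfold Gm; lra).
  assert (G_le : forall t y, y <= Rb -> G t y <= Gm)
    by (intros t y Hy; pose proof (G_le0 t y Hy); pose proof (Rmax_l Gm0 1); unfold Gm; lra).
  exists (Rb / (2 * Gm)). split; [apply Rdiv_lt_0_compat; lra|].
  intros lam Hlam HlamR.
  assert (HlamG : lam * Gm < Rb).
  { apply Rlt_div_r in HlamR; [|lra]. lra. }
  destruct (G_superlinear (17 / lam)) as [d0 [Hd0 Hsup]].
  apply (limit_solution_exists G Rb Gm lam (Rmin d0 Rb) (17 / lam)); try assumption.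
  - intros t y Ht Hy. apply Hsup; [exact Ht|]. pose proof (Rmin_l d0 Rb). lra.
  - replace (lam * (17 / lam)) with 17 by (field; lra). lra.
  - split; [apply Rmin_glb_lt; lra | apply Rmin_r].
Qed.

Lemma continuity_pt_of_ex_derive f t : ex_derive f t -> continuity_pt f t.
Proof. intros H. apply continuity_pt_filterlim. exact (ex_derive_continuous f t H). Qed.

Lemma continuity_pt_estimate f x : continuity_pt f x ->
  forall eps, 0 < eps -> exists del, 0 < del /\
    forall y, Rabs (y - x) < del -> Rabs (f y - f x) < eps.
Proof.
  intros H eps Heps. destruct (H eps Heps) as [del [Hdel Hd]].
  exists del. split; [exact Hdel|]. intros y Hy.
  destruct (Req_dec y x) as [->|Hne].
  - rewrite Rminus_diag, Rabs_R0. exact Heps.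
  - apply (Hd y). split; [split; [exact I | intros E; apply Hne; symmetry; exact E] | exact Hy].
Qed.

Lemma Rpower_Rpower_inv x e : 0 < x -> 0 < e -> Rpower (Rpower x e) (1 / e) = x.
Proof.
  intros Hx He. rewrite Rpower_mult. replace (e * (1 / e)) with 1 by (field; lra).
  apply Rpower_1, Hx.
Qed.

Section RadiusHighDimension.
Variables r1 r2 : R.
Variable k : nat.
Hypothesis r1_gt0 : 0 < r1.
Hypothesis r1_lt_r2 : r1 < r2.

Let N := S (S (S k)).
Let a := Rpower r1 (INR N - 2).
Let b := Rpower r2 (INR N - 2).

Let N_ge3 : 3 <= INR N.
Proof. unfold N. rewrite !S_INR. pose proof (pos_INR k). lra. Qed.

Let a_lt_b : 0 < a < b.
Proof.
  pose proof N_ge3. split; [apply exp_pos|].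
  apply exp_increasing, Rmult_lt_compat_l; [lra | apply ln_increasing; lra].
Qed.

(* r(t)^(N-2) = cA / (cB - t) has reciprocal linear in t, from r1^(2-N) at 0 to r2^(2-N) at 1. *)
Let radius_base_eq t : t <= 1 -> cA r1 r2 N / (cB r1 r2 N - t) = a * b / (b - t * (b - a)).
Proof.
  intros Ht. pose proof a_lt_b. unfold cA, cB.
  rewrite <- Rpower_mult_distr by lra. fold a b.
  assert (0 < b - t * (b - a)) by nra.
  field. lra.
Qed.

Let cB_sub_gt0 t : t <= 1 -> 0 < cB r1 r2 N - t.
Proof.
  intros Ht. pose proof a_lt_b. unfold cB. fold b. fold a.
  replace (b / (b - a) - t) with ((b - t * (b - a)) / (b - a)) by (field; lra).
  apply Rdiv_lt_0_compat; nra.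
Qed.

Let radius_base_range t : 0 <= t <= 1 -> a <= cA r1 r2 N / (cB r1 r2 N - t) <= b.
Proof.
  intros Ht. pose proof a_lt_b. rewrite radius_base_eq by lra.
  assert (a <= b - t * (b - a) <= b) by nra.
  split; [apply Rle_div_r | apply Rle_div_l]; nra.
Qed.

Lemma radius_range_high t : 0 <= t <= 1 -> r1 <= radius r1 r2 N t <= r2.
Proof.
  intros Ht. pose proof N_ge3. pose proof a_lt_b. destruct (radius_base_range t Ht).
  change (radius r1 r2 N t) with (Rpower (cA r1 r2 N / (cB r1 r2 N - t)) (1 / (INR N - 2))).
  assert (He : 0 <= 1 / (INR N - 2)) by (apply Rlt_le, Rdiv_lt_0_compat; lra).
  assert (Ea : Rpower a (1 / (INR N - 2)) = r1) by (apply Rpower_Rpower_inv; lra).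
  assert (Eb : Rpower b (1 / (INR N - 2)) = r2) by (apply Rpower_Rpower_inv; lra).
  split.
  - rewrite <- Ea at 1. apply Rle_Rpower_l; lra.
  - eapply Rle_trans; [apply (Rle_Rpower_l _ b); lra | right; exact Eb].
Qed.

Lemma radius_continuous_high t : 0 <= t <= 1 -> continuity_pt (radius r1 r2 N) t.
Proof.
  intros Ht. apply continuity_pt_of_ex_derive.
  change (radius r1 r2 N)
    with (fun t => Rpower (cA r1 r2 N / (cB r1 r2 N - t)) (1 / (INR N - 2))).
  pose proof (cB_sub_gt0 t ltac:(lra)). pose proof (radius_base_range t Ht). pose proof a_lt_b.
  unfold Rpower. auto_derive.
  split; [lra | split; [change (0 < cA r1 r2 N / (cB r1 r2 N - t)); lra | exact I]].
Qed.

Lemma qfun_pos_high t : 0 <= t <= 1 -> 0 < qfun r1 r2 N t.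
Proof.
  intros Ht. pose proof N_ge3.
  change (qfun r1 r2 N t) with (/ ((INR N - 2) ^ 2) * Rpower (cA r1 r2 N) (2 / (INR N - 2))
         / Rpower (cB r1 r2 N - t) (2 * (INR N - 1) / (INR N - 2))).
  apply Rdiv_lt_0_compat; [apply Rmult_lt_0_compat|]; try apply exp_pos.
  apply Rinv_0_lt_compat, pow_lt. lra.
Qed.

Lemma qfun_continuous_high t : 0 <= t <= 1 -> continuity_pt (qfun r1 r2 N) t.
Proof.
  intros Ht. apply continuity_pt_of_ex_derive. pose proof N_ge3.
  change (qfun r1 r2 N) with (fun t => / ((INR N - 2) ^ 2) * Rpower (cA r1 r2 N) (2 / (INR N - 2))
         / Rpower (cB r1 r2 N - t) (2 * (INR N - 1) / (INR N - 2))).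
  pose proof (cB_sub_gt0 t ltac:(lra)).
  unfold Rpower. auto_derive. split; [lra| split; [apply Rgt_not_eq, exp_pos | exact I]].
Qed.

End RadiusHighDimension.

Section RadiusPlane.
Variables r1 r2 : R.
Hypothesis r1_gt0 : 0 < r1.
Hypothesis r1_lt_r2 : r1 < r2.

Lemma radius_range_plane t : 0 <= t <= 1 -> r1 <= radius r1 r2 2 t <= r2.
Proof.
  intros Ht. change (radius r1 r2 2 t) with (r2 * Rpower (r1 / r2) t).
  assert (Hq : 0 < r1 / r2 < 1) by (split; [apply Rdiv_lt_0_compat | apply Rlt_div_l]; lra).
  assert (Hl : ln (r1 / r2) < 0) by (rewrite <- ln_1; apply ln_increasing; lra).
  assert (Hexp : forall x y, x <= y -> exp x <= exp y)
    by (intros x y [Hxy | ->]; [apply Rlt_le, exp_increasing, Hxy | lra]).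
  unfold Rpower. split.
  - assert (exp (1 * ln (r1 / r2)) <= exp (t * ln (r1 / r2))) by (apply Hexp; nra).
    rewrite Rmult_1_l, exp_ln in H by lra.
    apply (Rmult_le_compat_l r2) in H; [|lra].
    replace (r2 * (r1 / r2)) with r1 in H by (field; lra). exact H.
  - assert (exp (t * ln (r1 / r2)) <= exp 0) by (apply Hexp; nra).
    rewrite exp_0 in H. apply (Rmult_le_compat_l r2) in H; lra.
Qed.

Lemma radius_continuous_plane t : continuity_pt (radius r1 r2 2) t.
Proof.
  apply continuity_pt_of_ex_derive. change (radius r1 r2 2) with (fun t => r2 * Rpower (r1 / r2) t).
  unfold Rpower. auto_derive. exact I.
Qed.

Lemma qfun_pos_plane t : 0 < qfun r1 r2 2 t.
Proof.
  change (qfun r1 r2 2 t) with ((r2 * Rpower (r1 / r2) t * ln (r2 / r1)) ^ 2).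
  assert (0 < ln (r2 / r1))
    by (rewrite <- ln_1; apply ln_increasing; [lra | apply Rlt_div_r; lra]).
  apply pow_lt, Rmult_lt_0_compat; [apply Rmult_lt_0_compat; [lra | apply exp_pos] | exact H].
Qed.

Lemma qfun_continuous_plane t : continuity_pt (qfun r1 r2 2) t.
Proof.
  apply continuity_pt_of_ex_derive.
  change (qfun r1 r2 2) with (fun t => (r2 * Rpower (r1 / r2) t * ln (r2 / r1)) ^ 2).
  unfold Rpower. auto_derive. exact I.
Qed.

End RadiusPlane.

Definition clamp01 (t : R) : R := Rmax 0 (Rmin t 1).

Lemma clamp01_range t : 0 <= clamp01 t <= 1.
Proof. unfold clamp01, Rmax, Rmin. repeat destruct Rle_dec; lra. Qed.

Lemma clamp01_id t : 0 <= t <= 1 -> clamp01 t = t.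
Proof. intros H. unfold clamp01, Rmax, Rmin. repeat destruct Rle_dec; lra. Qed.

Lemma clamp01_lipschitz t t' : Rabs (clamp01 t' - clamp01 t) <= Rabs (t' - t).
Proof.
  pose proof (Rle_abs (t' - t)). pose proof (Rabs_maj2 (t' - t)).
  apply Rabs_le_between. unfold clamp01, Rmax, Rmin. repeat destruct Rle_dec; lra.
Qed.

Lemma Rmax0_lipschitz y y' : Rabs (Rmax 0 y' - Rmax 0 y) <= Rabs (y' - y).
Proof.
  pose proof (Rle_abs (y' - y)). pose proof (Rabs_maj2 (y' - y)).
  apply Rabs_le_between. unfold Rmax. repeat destruct Rle_dec; lra.
Qed.

Lemma Rabs_mult_sub_le a0 a1 b0 b1 e1 e2 :
  Rabs (a1 - a0) <= e1 <= 1 -> Rabs (b1 - b0) <= e2 ->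
  Rabs (a1 * b1 - a0 * b0) <= (Rabs a0 + 1) * e2 + e1 * Rabs b0.
Proof.
  intros Ha Hb.
  replace (a1 * b1 - a0 * b0) with (a1 * (b1 - b0) + (a1 - a0) * b0) by ring.
  eapply Rle_trans; [apply Rabs_triang|]. rewrite !Rabs_mult.
  assert (Ha1 : Rabs a1 <= Rabs a0 + 1).
  { pose proof (Rabs_triang (a1 - a0) a0). replace (a1 - a0 + a0) with a1 in H by ring. lra. }
  apply Rplus_le_compat.
  - apply Rmult_le_compat; [apply Rabs_pos | apply Rabs_pos | exact Ha1 | exact Hb].
  - apply Rmult_le_compat_r; [apply Rabs_pos | apply Ha].
Qed.

Lemma Derive2_of_derivable_pt_lim (u v g : R -> R) t :
  (forall t, 0 < t < 1 -> derivable_pt_lim u t (v t)) ->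
  (forall t, 0 < t < 1 -> derivable_pt_lim v t (g t)) ->
  continuity_pt g t -> 0 < t < 1 ->
  ex_derive u t /\ ex_derive (Derive u) t /\ continuous (Derive (Derive u)) t /\
  Derive (Derive u) t = g t.
Proof.
  intros Hu Hv Hg Ht.
  assert (Hloc : forall P : R -> Prop, (forall y, 0 < y < 1 -> P y) -> locally t P).
  { intros P HP. apply (locally_interval P t (Finite 0) (Finite 1)); simpl; try lra.
    intros y H1 H2. apply HP. lra. }
  assert (Du : forall y, 0 < y < 1 -> Derive u y = v y)
    by (intros y Hy; apply is_derive_unique, is_derive_Reals, Hu, Hy).
  assert (DDu : forall y, 0 < y < 1 -> is_derive (Derive u) y (g y)).
  { intros y Hy. apply (is_derive_ext_loc v).
    - apply (locally_interval _ y (Finite 0) (Finite 1)); simpl; try lra.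
      intros z H1 H2. symmetry. apply Du. lra.
    - apply is_derive_Reals, Hv, Hy. }
  split; [|split; [|split]].
  - exists (v t). apply is_derive_Reals, Hu, Ht.
  - exists (g t). apply DDu, Ht.
  - apply (continuous_ext_loc _ g); [|apply continuity_pt_filterlim, Hg].
    apply Hloc. intros y Hy. symmetry. apply is_derive_unique, DDu, Hy.
  - apply is_derive_unique, DDu, Ht.
Qed.

Section Problem.
Variables r1 r2 : R.
Variable N : nat.
Variable h : R -> R -> R.
Hypothesis r1_gt0 : 0 < r1.
Hypothesis r1_lt_r2 : r1 < r2.
Hypothesis N_ge2 : (2 <= N)%nat.
Hypothesis h_cont : continuous_on_domain r1 r2 h.
Hypothesis h_ge0 : forall t u, r1 <= t <= r2 -> 0 <= u -> 0 <= h t u.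

Let dimension_cases : N = 2%nat \/ exists k, N = S (S (S k)).
Proof.
  destruct N as [|[|[|k]]]; [lia | lia | left; reflexivity | right; exists k; reflexivity].
Qed.

Lemma radius_range t : 0 <= t <= 1 -> r1 <= radius r1 r2 N t <= r2.
Proof.
  intros Ht. destruct dimension_cases as [-> | [k ->]];
    [apply radius_range_plane | apply radius_range_high]; assumption.
Qed.

Lemma radius_continuous t : 0 <= t <= 1 -> continuity_pt (radius r1 r2 N) t.
Proof.
  intros Ht. destruct dimension_cases as [-> | [k ->]];
    [apply radius_continuous_plane | apply radius_continuous_high]; assumption.
Qed.

Lemma qfun_pos t : 0 <= t <= 1 -> 0 < qfun r1 r2 N t.
Proof.
  intros Ht. destruct dimension_cases as [-> | [k ->]];
    [apply qfun_pos_plane | apply qfun_pos_high]; assumption.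
Qed.

Lemma qfun_continuous t : 0 <= t <= 1 -> continuity_pt (qfun r1 r2 N) t.
Proof.
  intros Ht. destruct dimension_cases as [-> | [k ->]];
    [apply qfun_continuous_plane | apply qfun_continuous_high]; assumption.
Qed.

Lemma qfun_lower_bound : exists mq, 0 < mq /\ forall t, 0 <= t <= 1 -> mq <= qfun r1 r2 N t.
Proof.
  destruct (continuity_ab_min (qfun r1 r2 N) 0 1 ltac:(lra) qfun_continuous) as [t0 [Hmin Ht0]].
  exists (qfun r1 r2 N t0). split; [apply qfun_pos, Ht0 | exact Hmin].
Qed.

Definition weighted_rhs t z := qfun r1 r2 N t * h (radius r1 r2 N t) z.

(* Clamping both arguments extends [weighted_rhs] to a nonnegative continuous function on R x R. *)
Definition extended_rhs t y := weighted_rhs (clamp01 t) (Rmax 0 y).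

Lemma weighted_rhs_continuous t z : 0 <= t <= 1 -> 0 <= z ->
  forall eps, 0 < eps -> exists del, 0 < del /\
  forall t' z', 0 <= t' <= 1 -> 0 <= z' -> Rabs (t' - t) < del -> Rabs (z' - z) < del ->
  Rabs (weighted_rhs t' z' - weighted_rhs t z) < eps.
Proof.
  intros Ht Hz eps Heps. unfold weighted_rhs.
  set (q0 := qfun r1 r2 N t). set (h0 := h (radius r1 r2 N t) z).
  pose proof (Rabs_pos q0). pose proof (Rabs_pos h0).
  set (e1 := Rmin 1 (eps / (4 * (Rabs h0 + 1)))).
  assert (He1 : 0 < e1) by (apply Rmin_glb_lt; [lra | apply Rdiv_lt_0_compat; lra]).
  set (e2 := eps / (4 * (Rabs q0 + 1))).
  assert (He2 : 0 < e2) by (apply Rdiv_lt_0_compat; lra).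
  destruct (continuity_pt_estimate _ _ (qfun_continuous t Ht) e1 He1) as [dq [Hdq Hq]].
  destruct (h_cont (radius r1 r2 N t) z (radius_range t Ht) Hz e2 He2) as [dh [Hdh Hh]].
  destruct (continuity_pt_estimate _ _ (radius_continuous t Ht) dh Hdh) as [dr [Hdr Hr]].
  exists (Rmin dq (Rmin dr dh)). split; [repeat apply Rmin_glb_lt; assumption|].
  intros t' z' Ht' Hz' Htt Hzz.
  pose proof (Rmin_l dq (Rmin dr dh)). pose proof (Rmin_r dq (Rmin dr dh)).
  pose proof (Rmin_l dr dh). pose proof (Rmin_r dr dh).
  eapply Rle_lt_trans; [apply (Rabs_mult_sub_le _ _ _ _ e1 e2)|].
  - split; [apply Rlt_le, Hq; lra | apply Rmin_l].
  - apply Rlt_le, Hh; [apply radius_range, Ht' | exact Hz' | apply Hr; lra | lra].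
  - assert ((Rabs q0 + 1) * e2 = eps / 4) by (unfold e2; field; lra).
    assert (e1 * Rabs h0 <= eps / (4 * (Rabs h0 + 1)) * Rabs h0)
      by (apply Rmult_le_compat_r; [lra | apply Rmin_r]).
    assert (eps / (4 * (Rabs h0 + 1)) * Rabs h0 <= eps / 4).
    { replace (eps / (4 * (Rabs h0 + 1)) * Rabs h0)
        with (eps / 4 * (Rabs h0 / (Rabs h0 + 1))) by (field; lra).
      assert (Rabs h0 / (Rabs h0 + 1) <= 1) by (apply Rle_div_l; lra).
      rewrite <- (Rmult_1_r (eps / 4)) at 2. apply Rmult_le_compat_l; lra. }
    lra.
Qed.

Lemma extended_rhs_ge0 t y : 0 <= extended_rhs t y.
Proof.
  unfold extended_rhs, weighted_rhs. pose proof (clamp01_range t).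
  apply Rmult_le_pos; [apply Rlt_le, qfun_pos, clamp01_range |].
  apply h_ge0; [apply radius_range, clamp01_range | apply Rmax_l].
Qed.

Lemma extended_rhs_continuous t y eps : 0 < eps -> exists del, 0 < del /\
  forall t' y', Rabs (t' - t) < del -> Rabs (y' - y) < del ->
  Rabs (extended_rhs t' y' - extended_rhs t y) < eps.
Proof.
  intros Heps.
  destruct (weighted_rhs_continuous (clamp01 t) (Rmax 0 y) (clamp01_range t) (Rmax_l 0 y)
              eps Heps) as [del [Hdel H]].
  exists del. split; [exact Hdel|]. intros t' y' Ht Hy. apply H.
  - apply clamp01_range.
  - apply Rmax_l.
  - eapply Rle_lt_trans; [apply clamp01_lipschitz | exact Ht].
  - eapply Rle_lt_trans; [apply Rmax0_lipschitz | exact Hy].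
Qed.

Lemma extended_rhs_bounded Rb : 0 < Rb ->
  exists Gm, forall t y, y <= Rb -> extended_rhs t y <= Gm.
Proof.
  intros HRb.
  destruct (continuous_rect_bounded weighted_rhs 0 1 0 Rb) as [B HB].
  - intros t y Ht Hy eps Heps.
    destruct (weighted_rhs_continuous t y Ht (proj1 Hy) eps Heps) as [del [Hdel H]].
    exists del. split; [exact Hdel|]. intros t' y' Ht' Hy'. apply H; [exact Ht' | lra].
  - exists B. intros t y Hy. apply HB; [apply clamp01_range|].
    split; [apply Rmax_l | apply Rmax_lub; lra].
Qed.

Lemma extended_rhs_eq t y : 0 < t < 1 -> 0 <= y ->
  extended_rhs t y = qfun r1 r2 N t * ffun r1 r2 N h t y.
Proof.
  intros Ht Hy. unfold extended_rhs, weighted_rhs, ffun.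
  rewrite clamp01_id, Rmax_right by lra. reflexivity.
Qed.

Lemma extended_rhs_superlinear :
  (forall M, exists d, 0 < d /\
     forall t u, 0 < t < 1 -> 0 < u < d -> M < ffun r1 r2 N h t u / u) ->
  forall M, exists d, 0 < d /\ forall t y, 0 < t < 1 -> 0 < y < d -> M * y <= extended_rhs t y.
Proof.
  intros Hblow M. destruct qfun_lower_bound as [mq [Hmq Hq]].
  destruct (Hblow (Rabs M / mq)) as [d [Hd Hf]]. exists d. split; [exact Hd|].
  intros t y Ht Hy. rewrite extended_rhs_eq by lra.
  specialize (Hf t y Ht Hy). apply Rlt_div_r in Hf; [|lra].
  pose proof (Hq t ltac:(lra)). pose proof (RRle_abs M). pose proof (Rabs_pos M).
  assert (0 <= Rabs M / mq * y) by (apply Rmult_le_pos; [apply Rdiv_le_0_compat|]; lra).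
  assert (Hprod : mq * (Rabs M / mq * y) <= qfun r1 r2 N t * ffun r1 r2 N h t y)
    by (apply Rmult_le_compat; lra).
  replace (mq * (Rabs M / mq * y)) with (Rabs M * y) in Hprod by (field; lra).
  assert (M * y <= Rabs M * y) by (apply Rmult_le_compat_r; lra).
  lra.
Qed.

End Problem.

Lemma positive_solution_of_ode r1 r2 N h lam (G : R -> R -> R) (u v : R -> R) :
  continuous_on_01 u -> u 0 = 0 -> u 1 = 0 -> (forall t, 0 < t < 1 -> 0 < u t) ->
  solves_ode G lam u v ->
  (forall t, 0 < t < 1 -> G t (u t) = qfun r1 r2 N t * ffun r1 r2 N h t (u t)) ->
  positive_solution r1 r2 N h lam u.
Proof.
  intros Hc H0 H1 Hpos Hode HG.
  assert (HD : forall t, 0 < t < 1 ->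
    ex_derive u t /\ ex_derive (Derive u) t /\ continuous (Derive (Derive u)) t /\
    Derive (Derive u) t = - lam * G t (u t)).
  { intros t Ht. apply (Derive2_of_derivable_pt_lim u v (fun y => - lam * G y (u y)));
      try apply Hode; try exact Ht.
    apply (continuity_pt_scal (fun y => G y (u y))), Hode, Ht. }
  split; [exact Hc|].
  split; [intros t Ht; destruct (HD t Ht) as [Du [DDu [Hcont _]]]; auto|].
  split; [|split; [exact H0 | split; [exact H1 | exact Hpos]]].
  intros t Ht. destruct (HD t Ht) as [_ [_ [_ ->]]]. rewrite HG by exact Ht. ring.
Qed.

Theorem theorem1p2 (r1 r2 : R) (N : nat) (h : R -> R -> R) :
  0 < r1 -> r1 < r2 -> (2 <= N)%nat ->
  continuous_on_domain r1 r2 h ->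
  (forall t u, r1 <= t <= r2 -> 0 <= u -> 0 <= h t u) ->
  (forall t, r1 <= t <= r2 -> h t 0 = 0) ->
  (* f(t,u)/u -> +oo as u -> 0+, uniformly in t in (0,1) *)
  (forall M, exists d, 0 < d /\
     forall t u, 0 < t < 1 -> 0 < u < d -> M < ffun r1 r2 N h t u / u) ->
  forall Rb, 0 < Rb ->
  exists lamR, 0 < lamR /\
    forall lam, 0 < lam -> lam < lamR ->
      exists u : R -> R, positive_solution r1 r2 N h lam u /\
        (forall t, 0 <= t <= 1 -> u t <= Rb).
Proof.
  intros Hr1 Hr12 HN Hcont Hh0 _ Hblow Rb HRb.
  destruct (small_lambda_solution (extended_rhs r1 r2 N h) Rb HRb
              (extended_rhs_ge0 r1 r2 N h Hr1 Hr12 HN Hh0)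
              (extended_rhs_continuous r1 r2 N h Hr1 Hr12 HN Hcont)
              (extended_rhs_bounded r1 r2 N h Hr1 Hr12 HN Hcont Rb HRb)
              (extended_rhs_superlinear r1 r2 N h Hr1 Hr12 HN Hblow))
    as [lamR [HlamR Hsol]].
  exists lamR. split; [exact HlamR|]. intros lam Hlam HlamR'.
  destruct (Hsol lam Hlam HlamR') as [u [v [Hc [H0 [H1 [Hpos [Hb Hode]]]]]]].
  exists u. split; [|exact Hb].
  apply (positive_solution_of_ode r1 r2 N h lam (extended_rhs r1 r2 N h) u v); try assumption.
  intros t Ht. apply extended_rhs_eq; [exact Ht | apply Rlt_le, Hpos, Ht].
Qed.
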